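(* For any $n\ge2$, there exists a $\Sigma^0_n$ equivalence relation on $2^\mathbb{N}$ which is not $\Pi^0_n$-graphable. Also, for any $n\ge1$, there exists a $\Sigma^0_n$ equivalence relation on $\mathbb{N}$ which is not $\Pi^0_n$-graphable.
   Context: $E$ is $\Gamma$-graphable if there is a simple undirected graph $G$ in $\Gamma$ whose connectedness relation (connected by a finite path) equals $E$. Pointclasses are lightface. *)

(* Lightface arithmetical hierarchy via formulas of
   (second-order) arithmetic with number variables and real (set) variables. *)
From Stdlib Require Import Relations Relation_Operators.

(* Arithmetic terms; number variables are de Bruijn indices. *)
Inductive term : Type :=
| tvar : nat -> term
| tzero : term
| tsucc : term -> term
| tplus : term -> term -> term
| tmult : term -> term -> term.

(* Formulas.  [fmem i t] means "t belongs to the real X_i" (X_i : nat -> bool).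
   Quantifiers bind number variable 0.  [fbex t p] is (exists x < t, p),
   [fball t p] is (forall x < t, p), with t evaluated outside the binder. *)
Inductive formula : Type :=
| feq : term -> term -> formula
| flt : term -> term -> formula
| fmem : nat -> term -> formula
| fnot : formula -> formula
| fand : formula -> formula -> formula
| forr : formula -> formula -> formula
| fbex : term -> formula -> formula
| fball : term -> formula -> formula
| fex : formula -> formula
| fall : formula -> formula.

Definition scons {A : Type} (a : A) (rho : nat -> A) : nat -> A :=
  fun i => match i with 0 => a | S j => rho j end.

Fixpoint teval (rho : nat -> nat) (t : term) : nat :=
  match t with
  | tvar i => rho i
  | tzero => 0
  | tsucc u => S (teval rho u)
  | tplus u v => teval rho u + teval rho v
  | tmult u v => teval rho u * teval rho v
  end.

Fixpoint sat (xi : nat -> nat -> bool) (rho : nat -> nat) (p : formula) : Prop :=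
  match p with
  | feq u v => teval rho u = teval rho v
  | flt u v => teval rho u < teval rho v
  | fmem i u => xi i (teval rho u) = true
  | fnot q => ~ sat xi rho q
  | fand q r => sat xi rho q /\ sat xi rho r
  | forr q r => sat xi rho q \/ sat xi rho r
  | fbex u q => exists a, a < teval rho u /\ sat xi (scons a rho) q
  | fball u q => forall a, a < teval rho u -> sat xi (scons a rho) q
  | fex q => exists a, sat xi (scons a rho) q
  | fall q => forall a, sat xi (scons a rho) q
  end.

Fixpoint bounded (p : formula) : Prop :=
  match p with
  | feq _ _ | flt _ _ | fmem _ _ => True
  | fnot q => bounded q
  | fand q r | forr q r => bounded q /\ bounded r
  | fbex _ q | fball _ q => bounded q
  | fex _ | fall _ => False
  end.

Fixpoint is_Sigma (n : nat) (p : formula) : Prop :=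
  match n with
  | 0 => bounded p
  | S m => match p with fex q => is_Pi m q | _ => False end
  end
with is_Pi (n : nat) (p : formula) : Prop :=
  match n with
  | 0 => bounded p
  | S m => match p with fall q => is_Sigma m q | _ => False end
  end.

Definition no_reals : nat -> nat -> bool := fun _ _ => false.
Definition no_nums : nat -> nat := fun _ => 0.

Definition nat_rel_def (cls : formula -> Prop) (R : nat -> nat -> Prop) : Prop :=
  exists p, cls p /\
    forall a b, R a b <-> sat no_reals (scons a (scons b no_nums)) p.

(* Binary relations on Cantor space 2^N = nat -> bool defined by a formula
   with free real variables X_0, X_1 (lightface: no other parameters). *)
Definition cantor_rel_def (cls : formula -> Prop)
  (R : (nat -> bool) -> (nat -> bool) -> Prop) : Prop :=
  exists p, cls p /\
    forall x y, R x y <-> sat (scons x (scons y no_reals)) no_nums p.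

Definition Sigma0_nat (n : nat) := nat_rel_def (is_Sigma n).
Definition Pi0_nat (n : nat) := nat_rel_def (is_Pi n).
Definition Sigma0_cantor (n : nat) := cantor_rel_def (is_Sigma n).
Definition Pi0_cantor (n : nat) := cantor_rel_def (is_Pi n).

Definition graphable {X : Type} (Gamma : (X -> X -> Prop) -> Prop)
  (E : X -> X -> Prop) : Prop :=
  exists G : X -> X -> Prop, Gamma G /\
    (forall x y, G x y -> G y x) /\ (forall x, ~ G x x) /\
    (forall x y, E x y <-> clos_refl_trans X G x y).

(* A set D of numbers that is Sigma^0_n but not Pi^0_n is obtained by
   diagonalisation: 2f is in D when f codes a bounded formula t and the
   Pi^0_n formula (forall y1, exists y2, ..., t) fails at 2f.  This needs D to
   be Sigma^0_n, i.e. truth of bounded formulas to be Delta^0_1; it is, because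
   a truth value is witnessed by a finite self-justifying set of computation
   records, and finite sets are coded by single numbers via Goedel's moduli.

   On N, let a ~ a+1 exactly when a is in D (D consists of even numbers, so
   classes have at most two elements).  A simple graph whose connectedness is
   ~ must then contain the edge {a, a+1} iff a is in D, so a Pi^0_n graph would
   make D a Pi^0_n set.  On Cantor space the same is done with the pairs of
   reals (point0 k, point1 k), which differ only at position 0; the other
   classes are singletons, and since equality of reals is Pi^0_1 this requires
   n >= 2.  Substituting these reals into a Pi^0_n definition of the graph
   gives a Pi^0_n definition of D. *)

From Stdlib Require Import Relations.
From Stdlib Require Import Arith Lia List Classical Bool FunctionalExtensionality Factorial.
Import ListNotations.

(** * Environments and substitution *)

Lemma teval_ext (t : term) (rho rho' : nat -> nat) :
  (forall i, rho i = rho' i) -> teval rho t = teval rho' t.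
Proof. induction t; intros; simpl; auto. Qed.

Lemma scons_ext {A : Type} (a : A) (rho rho' : nat -> A) :
  (forall i, rho i = rho' i) -> forall i, scons a rho i = scons a rho' i.
Proof. intros H [|i]; simpl; auto. Qed.

Lemma sat_ext (p : formula) : forall xi rho rho',
  (forall i, rho i = rho' i) -> (sat xi rho p <-> sat xi rho' p).
Proof.
  induction p; intros xi rho rho' H; simpl;
    try (assert (Hq : forall a, sat xi (scons a rho) p <-> sat xi (scons a rho') p)
           by (intro a; apply IHp, scons_ext, H); setoid_rewrite Hq);
    rewrite ?(teval_ext _ rho rho' H), ?(IHp xi rho rho' H),
      ?(IHp1 xi rho rho' H), ?(IHp2 xi rho rho' H); reflexivity.
Qed.

Fixpoint tsubst (s : nat -> term) (t : term) : term :=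
  match t with
  | tvar i => s i
  | tzero => tzero
  | tsucc u => tsucc (tsubst s u)
  | tplus u v => tplus (tsubst s u) (tsubst s v)
  | tmult u v => tmult (tsubst s u) (tsubst s v)
  end.

Definition tlift (t : term) : term := tsubst (fun k => tvar (S k)) t.

Definition subst_up (s : nat -> term) : nat -> term :=
  fun i => match i with 0 => tvar 0 | S j => tlift (s j) end.

Fixpoint fsubst (s : nat -> term) (p : formula) : formula :=
  match p with
  | feq u v => feq (tsubst s u) (tsubst s v)
  | flt u v => flt (tsubst s u) (tsubst s v)
  | fmem i u => fmem i (tsubst s u)
  | fnot q => fnot (fsubst s q)
  | fand q r => fand (fsubst s q) (fsubst s r)
  | forr q r => forr (fsubst s q) (fsubst s r)
  | fbex u q => fbex (tsubst s u) (fsubst (subst_up s) q)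
  | fball u q => fball (tsubst s u) (fsubst (subst_up s) q)
  | fex q => fex (fsubst (subst_up s) q)
  | fall q => fall (fsubst (subst_up s) q)
  end.

Lemma teval_tsubst (t : term) (s : nat -> term) (rho : nat -> nat) :
  teval rho (tsubst s t) = teval (fun i => teval rho (s i)) t.
Proof. induction t; simpl; auto. Qed.

Lemma teval_tlift (t : term) (a : nat) (rho : nat -> nat) :
  teval (scons a rho) (tlift t) = teval rho t.
Proof. unfold tlift. rewrite teval_tsubst. apply teval_ext. reflexivity. Qed.

Lemma teval_subst_up (s : nat -> term) (a : nat) (rho : nat -> nat) (i : nat) :
  teval (scons a rho) (subst_up s i) = scons a (fun j => teval rho (s j)) i.
Proof. destruct i; simpl; auto using teval_tlift. Qed.

Lemma sat_fsubst (p : formula) : forall xi s rho,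
  sat xi rho (fsubst s p) <-> sat xi (fun i => teval rho (s i)) p.
Proof.
  induction p; intros xi s rho; simpl; rewrite ?teval_tsubst;
    try (assert (Hq : forall a, sat xi (scons a rho) (fsubst (subst_up s) p) <->
                                sat xi (scons a (fun i => teval rho (s i))) p)
           by (intro a; rewrite IHp; apply sat_ext, teval_subst_up);
         setoid_rewrite Hq);
    rewrite ?IHp, ?IHp1, ?IHp2; reflexivity.
Qed.

Lemma bounded_fsubst (p : formula) (s : nat -> term) : bounded p -> bounded (fsubst s p).
Proof. revert s; induction p; intros; simpl in *; intuition. Qed.

Lemma fsubst_Sigma_Pi (n : nat) :
  (forall p s, is_Sigma n p -> is_Sigma n (fsubst s p)) /\
  (forall p s, is_Pi n p -> is_Pi n (fsubst s p)).
Proof.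
  induction n; split; intros p s H; simpl in *; try (now apply bounded_fsubst);
    destruct p; try contradiction; now apply IHn.
Qed.

Definition fsubst_list (ts : list term) (p : formula) : formula :=
  fsubst (fun i => nth i ts tzero) p.

(** * Pairing and Goedel numbering of bounded formulas *)

(* Twice the Cantor pairing function: being a polynomial it is an arithmetic
   term, and "g is the pair of x and y" is the equation [g + g = pair2 x y]. *)
Definition pair2 (x y : nat) : nat := (x + y) * S (x + y) + (y + y).

Lemma pair2_inj (x y x' y' : nat) : pair2 x y = pair2 x' y' -> x = x' /\ y = y'.
Proof.
  unfold pair2; intros H.
  assert (Hs : x + y = x' + y').
  { destruct (lt_eq_lt_dec (x + y) (x' + y')) as [[Hl|He]|Hl]; auto; exfalso.
    - assert (S (x + y) * S (S (x + y)) <= (x' + y') * S (x' + y'))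
        by (apply Nat.mul_le_mono; lia). nia.
    - assert (S (x' + y') * S (S (x' + y')) <= (x + y) * S (x + y))
        by (apply Nat.mul_le_mono; lia). nia. }
  rewrite Hs in H. lia.
Qed.

Lemma pair2_ge (x y : nat) : x <= pair2 x y /\ y <= pair2 x y.
Proof. unfold pair2; nia. Qed.

Fixpoint unpair (g : nat) : nat * nat :=
  match g with
  | 0 => (0, 0)
  | S g' => let (x, y) := unpair g' in
            match x with 0 => (S y, 0) | S x' => (x', S y) end
  end.

Lemma unpair_spec (g x y : nat) : unpair g = (x, y) -> g + g = pair2 x y.
Proof.
  revert x y; induction g; simpl; intros x y H.
  - now inversion H.
  - destruct (unpair g) as [x0 y0]. specialize (IHg _ _ eq_refl).
    destruct x0; inversion H; subst; unfold pair2 in *; nia.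
Qed.

Lemma unpair_pair2 (g x y : nat) : g + g = pair2 x y -> unpair g = (x, y).
Proof.
  intros H. destruct (unpair g) as [a b] eqn:E.
  apply unpair_spec in E. rewrite H in E. now apply pair2_inj in E as [-> ->].
Qed.

Lemma unpair_le (g x y : nat) : unpair g = (x, y) -> x <= g /\ y <= g.
Proof. intros H. apply unpair_spec in H. unfold pair2 in H. nia. Qed.

Lemma pair2_half_le (g x y : nat) : g + g = pair2 x y -> x <= g /\ y <= g.
Proof. intros H. now apply unpair_le, unpair_pair2. Qed.

Lemma unpair_double (g : nat) : exists x y, g + g = pair2 x y /\ unpair g = (x, y).
Proof. destruct (unpair g) as [x y] eqn:E. exists x, y. auto using unpair_spec. Qed.

Fixpoint triangle (s : nat) : nat := match s with 0 => 0 | S s' => triangle s' + S s' end.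

Definition pair (x y : nat) : nat := triangle (x + y) + y.

Lemma pair_double (x y : nat) : pair x y + pair x y = pair2 x y.
Proof.
  assert (Ht : forall s, triangle s + triangle s = s * S s) by (induction s; simpl; nia).
  unfold pair, pair2. specialize (Ht (x + y)). lia.
Qed.

Lemma unpair_pair (x y : nat) : unpair (pair x y) = (x, y).
Proof. apply unpair_pair2, pair_double. Qed.

Fixpoint code_list (l : list nat) : nat :=
  match l with nil => 0 | a :: l' => S (pair2 a (code_list l')) end.

Definition list_env (l : list nat) : nat -> nat := fun i => nth i l 0.

Lemma list_env_cons (a : nat) (l : list nat) (i : nat) : scons a (list_env l) i = list_env (a :: l) i.
Proof. now destruct i. Qed.

Lemma code_list_inv (l : list nat) (a s : nat) :
  code_list l = S (pair2 a s) -> exists l', l = a :: l' /\ code_list l' = s.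
Proof.
  destruct l as [|b l]; simpl; intros H; [discriminate|]. injection H as H.
  apply pair2_inj in H as [-> <-]. eauto.
Qed.

Section CourseOfValues.
Variables (A : Type) (a0 : A) (step : (nat -> A) -> nat -> A).

Fixpoint fuel_rec (n t : nat) : A :=
  match n, t with
  | 0, _ | _, 0 => a0
  | S n', S g => step (fuel_rec n') g
  end.

(* [t + 1] steps of fuel suffice to evaluate at [t]. *)
Definition course_rec (t : nat) : A := fuel_rec (S t) t.

Hypothesis step_local : forall rec rec' g,
  (forall x, x <= g -> rec x = rec' x) -> step rec g = step rec' g.

Lemma fuel_rec_irrelevant (n m t : nat) : t < n -> t < m -> fuel_rec n t = fuel_rec m t.
Proof.
  revert m t; induction n; intros m t Hn Hm; [lia|]. destruct m; [lia|].
  destruct t as [|g]; [reflexivity|]. simpl.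
  apply step_local. intros x Hx. apply IHn; lia.
Qed.

Lemma course_rec_unfold (g : nat) : course_rec (S g) = step course_rec g.
Proof.
  change (step (fuel_rec (S g)) g = step course_rec g).
  apply step_local. intros x Hx. apply fuel_rec_irrelevant; lia.
Qed.

End CourseOfValues.

Arguments course_rec {A}.

Definition term_step (rec : nat -> term) (g : nat) : term :=
  let (tag, r) := unpair g in
  let (u, v) := unpair r in
  match tag with
  | 0 => tvar r
  | 1 => tsucc (rec r)
  | 2 => tplus (rec u) (rec v)
  | 3 => tmult (rec u) (rec v)
  | _ => tzero
  end.

Definition decode_term : nat -> term := course_rec tzero term_step.

Definition ffalse : formula := flt tzero tzero.

Definition formula_step (rec : nat -> formula) (g : nat) : formula :=
  let (tag, r) := unpair g in
  let (u, v) := unpair r in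
  match tag with
  | 0 => feq (decode_term u) (decode_term v)
  | 1 => flt (decode_term u) (decode_term v)
  | 2 => fnot (rec r)
  | 3 => fand (rec u) (rec v)
  | 4 => forr (rec u) (rec v)
  | 5 => fbex (decode_term u) (rec v)
  | 6 => fball (decode_term u) (rec v)
  | 7 => fmem u (decode_term v)
  | _ => ffalse
  end.

Definition decode_formula : nat -> formula := course_rec ffalse formula_step.

Lemma unpair_components_le (g : nat) :
  let (tag, r) := unpair g in let (u, v) := unpair r in
  tag <= g /\ r <= g /\ u <= g /\ v <= g.
Proof.
  destruct (unpair g) as [tag r] eqn:E. destruct (unpair r) as [u v] eqn:E'.
  apply unpair_le in E, E'. lia.
Qed.

Lemma decode_term_unfold (g : nat) : decode_term (S g) = term_step decode_term g.
Proof.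
  apply course_rec_unfold. intros rec rec' h Hrec. unfold term_step.
  pose proof (unpair_components_le h) as Hle.
  destruct (unpair h) as [tag r], (unpair r) as [u v].
  destruct tag as [|[|[|[|tag]]]]; rewrite ?Hrec by lia; reflexivity.
Qed.

Lemma decode_formula_unfold (g : nat) : decode_formula (S g) = formula_step decode_formula g.
Proof.
  apply course_rec_unfold. intros rec rec' h Hrec. unfold formula_step.
  pose proof (unpair_components_le h) as Hle.
  destruct (unpair h) as [tag r], (unpair r) as [u v].
  destruct tag as [|[|[|[|[|[|[|[|tag]]]]]]]]; rewrite ?Hrec by lia; reflexivity.
Qed.

Fixpoint encode_term (t : term) : nat :=
  match t with
  | tvar i => S (pair 0 i)
  | tzero => 0
  | tsucc u => S (pair 1 (encode_term u))
  | tplus u v => S (pair 2 (pair (encode_term u) (encode_term v)))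
  | tmult u v => S (pair 3 (pair (encode_term u) (encode_term v)))
  end.

Fixpoint encode_formula (p : formula) : nat :=
  match p with
  | feq u v => S (pair 0 (pair (encode_term u) (encode_term v)))
  | flt u v => S (pair 1 (pair (encode_term u) (encode_term v)))
  | fnot q => S (pair 2 (encode_formula q))
  | fand q r => S (pair 3 (pair (encode_formula q) (encode_formula r)))
  | forr q r => S (pair 4 (pair (encode_formula q) (encode_formula r)))
  | fbex u q => S (pair 5 (pair (encode_term u) (encode_formula q)))
  | fball u q => S (pair 6 (pair (encode_term u) (encode_formula q)))
  | fmem i u => S (pair 7 (pair i (encode_term u)))
  | fex _ | fall _ => 0
  end.

Lemma decode_encode_term (t : term) : decode_term (encode_term t) = t.
Proof.
  induction t; [|reflexivity|..]; simpl; rewrite decode_term_unfold;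
    unfold term_step; rewrite !unpair_pair;
    try destruct (unpair _); congruence.
Qed.

Lemma decode_encode_formula (p : formula) : bounded p -> decode_formula (encode_formula p) = p.
Proof.
  induction p; simpl; intros Hb; try contradiction;
    rewrite decode_formula_unfold; unfold formula_step; rewrite !unpair_pair;
    try destruct (unpair _); rewrite ?decode_encode_term; f_equal; tauto.
Qed.

(** * Certificates for the truth of bounded formulas *)

(* [rcode k x s v] records that the object [x] has value [v] in the environment
   coded by [s]: [x] is a term code if [k = 0], a formula code if [k = 1] (and
   then [v] is its truth bit), a variable index if [k = 2]. *)
Definition rcode (k x s v : nat) : nat := pair2 (pair2 k x) (pair2 s v).

Lemma rcode_inj (k x s v k' x' s' v' : nat) :
  rcode k x s v = rcode k' x' s' v' -> k = k' /\ x = x' /\ s = s' /\ v = v'.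
Proof.
  unfold rcode; intros H. apply pair2_inj in H as [H1 H2].
  apply pair2_inj in H1 as [? ?]; apply pair2_inj in H2 as [? ?]; auto.
Qed.

Lemma rcode_ge (k x s v : nat) :
  k <= rcode k x s v /\ x <= rcode k x s v /\ s <= rcode k x s v /\ v <= rcode k x s v.
Proof.
  unfold rcode. pose proof (pair2_ge k x); pose proof (pair2_ge s v);
  pose proof (pair2_ge (pair2 k x) (pair2 s v)); lia.
Qed.

(* [justified M j]: the record [j] follows by one evaluation step from records
   in [M]; a bounded quantifier consults the records for all values below the bound. *)
Section Justification.
Variable M : nat -> Prop.

Definition justifies_var (i s v : nat) : Prop :=
  (s = 0 /\ v = 0) \/
  exists a s', s = S (pair2 a s') /\
    ((i = 0 /\ v = a) \/ exists i', i = S i' /\ M (rcode 2 i' s' v)).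

Definition justifies_term (t s v : nat) : Prop :=
  (t = 0 /\ v = 0) \/
  exists g tag r u u', t = S g /\ g + g = pair2 tag r /\ r + r = pair2 u u' /\
   ((tag = 0 /\ M (rcode 2 r s v))
 \/ (tag = 1 /\ exists w, M (rcode 0 r s w) /\ v = S w)
 \/ (tag = 2 /\ exists w1 w2, M (rcode 0 u s w1) /\ M (rcode 0 u' s w2) /\ v = w1 + w2)
 \/ (tag = 3 /\ exists w1 w2, M (rcode 0 u s w1) /\ M (rcode 0 u' s w2) /\ v = w1 * w2)
 \/ (3 < tag /\ v = 0)).

Definition justifies_formula (f s b : nat) : Prop :=
  (f = 0 /\ b = 0) \/
  exists g tag r u u', f = S g /\ g + g = pair2 tag r /\ r + r = pair2 u u' /\
   ((tag = 0 /\ exists w1 w2, M (rcode 0 u s w1) /\ M (rcode 0 u' s w2) /\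
        ((b = 1 /\ w1 = w2) \/ (b = 0 /\ (w1 < w2 \/ w2 < w1))))
 \/ (tag = 1 /\ exists w1 w2, M (rcode 0 u s w1) /\ M (rcode 0 u' s w2) /\
        ((b = 1 /\ w1 < w2) \/ (b = 0 /\ w2 < S w1)))
 \/ (tag = 2 /\ ((b = 1 /\ M (rcode 1 r s 0)) \/ (b = 0 /\ M (rcode 1 r s 1))))
 \/ (tag = 3 /\ ((b = 1 /\ M (rcode 1 u s 1) /\ M (rcode 1 u' s 1)) \/
                 (b = 0 /\ (M (rcode 1 u s 0) \/ M (rcode 1 u' s 0)))))
 \/ (tag = 4 /\ ((b = 1 /\ (M (rcode 1 u s 1) \/ M (rcode 1 u' s 1))) \/
                 (b = 0 /\ M (rcode 1 u s 0) /\ M (rcode 1 u' s 0))))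
 \/ (tag = 5 /\ exists w, M (rcode 0 u s w) /\
        ((b = 1 /\ exists a, a < w /\ M (rcode 1 u' (S (pair2 a s)) 1)) \/
         (b = 0 /\ forall a, a < w -> M (rcode 1 u' (S (pair2 a s)) 0))))
 \/ (tag = 6 /\ exists w, M (rcode 0 u s w) /\
        ((b = 1 /\ forall a, a < w -> M (rcode 1 u' (S (pair2 a s)) 1)) \/
         (b = 0 /\ exists a, a < w /\ M (rcode 1 u' (S (pair2 a s)) 0))))
 \/ (6 < tag /\ b = 0)).

Definition justified (j : nat) : Prop :=
  exists k x s v, j = rcode k x s v /\
   ((k = 0 /\ justifies_term x s v) \/ (k = 1 /\ justifies_formula x s v) \/
    (k = 2 /\ justifies_var x s v)).

Lemma justify_term (t s v : nat) : justifies_term t s v -> justified (rcode 0 t s v).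
Proof. exists 0, t, s, v; auto. Qed.

Lemma justify_formula (f s b : nat) : justifies_formula f s b -> justified (rcode 1 f s b).
Proof. exists 1, f, s, b; auto. Qed.

Lemma justify_var (i s v : nat) : justifies_var i s v -> justified (rcode 2 i s v).
Proof. exists 2, i, s, v; auto. Qed.

End Justification.

Section Monotonicity.
Variables (M M' : nat -> Prop).
Hypothesis HMM : forall x, M x -> M' x.

Lemma justifies_term_mono (t s v : nat) : justifies_term M t s v -> justifies_term M' t s v.
Proof.
  intros [?|(g & tag & r & u & u' & E1 & E2 & E3 & HJ)]; [now left|right].
  exists g, tag, r, u, u'; repeat split; auto.
  destruct HJ as [[? ?]|[[? (w & ? & ?)]|[[? (w1 & w2 & ? & ? & ?)]|[[? (w1 & w2 & ? & ? & ?)]|?]]]].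
  - left; auto.
  - right; left; split; eauto.
  - right; right; left; split; eauto 7.
  - right; right; right; left; split; eauto 7.
  - right; right; right; right; auto.
Qed.

Lemma justifies_var_mono (i s v : nat) : justifies_var M i s v -> justifies_var M' i s v.
Proof.
  intros [?|(a & s' & E & [?|(i' & ? & ?)])]; [now left| |]; right; exists a, s'; split; auto.
  right; eauto.
Qed.

Lemma justifies_formula_mono (f s b : nat) : justifies_formula M f s b -> justifies_formula M' f s b.
Proof.
  intros [?|(g & tag & r & u & u' & E1 & E2 & E3 & HJ)]; [now left|right].
  exists g, tag, r, u, u'; repeat split; auto.
  destruct HJ as [[? (w1 & w2 & ? & ? & ?)]|[[? (w1 & w2 & ? & ? & ?)]|[[? HJ]|[[? HJ]|
                 [[? HJ]|[[? (w & ? & HJ)]|[[? (w & ? & HJ)]|?]]]]]]].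
  - left; split; eauto 7.
  - right; left; split; eauto 7.
  - do 2 right; left; split; auto. intuition.
  - do 3 right; left; split; auto. intuition.
  - do 4 right; left; split; auto. intuition.
  - do 5 right; left; split; auto. exists w; split; auto.
    destruct HJ as [[? (a & ? & ?)]|[? HJ]]; [left; split; eauto|right; split; auto].
  - do 6 right; left; split; auto. exists w; split; auto.
    destruct HJ as [[? HJ]|[? (a & ? & ?)]]; [left; split; auto|right; split; eauto].
  - do 7 right; auto.
Qed.

Lemma justified_mono (j : nat) : justified M j -> justified M' j.
Proof.
  intros (k & x & s & v & E & HJ). exists k, x, s, v; split; auto.
  destruct HJ as [[? HJ]|[[? HJ]|[? HJ]]].
  - left; split; auto; now apply justifies_term_mono.
  - right; left; split; auto; now apply justifies_formula_mono.
  - right; right; split; auto; now apply justifies_var_mono.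
Qed.

End Monotonicity.

Definition self_justifying (M : nat -> Prop) : Prop := forall j, M j -> justified M j.

Lemma justified_inv (M : nat -> Prop) (k x s v : nat) :
  self_justifying M -> M (rcode k x s v) ->
  (k = 0 /\ justifies_term M x s v) \/ (k = 1 /\ justifies_formula M x s v) \/
  (k = 2 /\ justifies_var M x s v).
Proof.
  intros HM Hj. destruct (HM _ Hj) as (k' & x' & s' & v' & E & H).
  now apply rcode_inj in E as (-> & -> & -> & ->).
Qed.

Definition truth_bit (b : nat) (P : Prop) : Prop := (b = 1 /\ P) \/ (b = 0 /\ ~ P).

Lemma truth_bit_1 (P : Prop) : truth_bit 1 P <-> P.
Proof. unfold truth_bit. intuition congruence. Qed.

Lemma truth_bit_0 (P : Prop) : truth_bit 0 P <-> ~ P.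
Proof. unfold truth_bit. intuition congruence. Qed.

Lemma sat_list_env_cons (xi : nat -> nat -> bool) (a : nat) (l : list nat) (p : formula) :
  sat xi (scons a (list_env l)) p <-> sat xi (list_env (a :: l)) p.
Proof. apply sat_ext, list_env_cons. Qed.

Section Soundness.
Variable M : nat -> Prop.
Hypothesis HM : self_justifying M.

Lemma var_record_sound (i : nat) : forall l v, M (rcode 2 i (code_list l) v) -> list_env l i = v.
Proof.
  induction i as [|i IH]; intros l v Hr;
    destruct (justified_inv _ _ _ _ _ HM Hr)
      as [[? _]|[[? _]|[_ [[Hs ->]|(a & s & Hs & Hi)]]]]; try discriminate;
    try (destruct l; [reflexivity|discriminate]);
    apply code_list_inv in Hs as (l' & -> & <-);
    destruct Hi as [[Hi ->]|(i' & Hi & Hr')]; try discriminate; [reflexivity|].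
  injection Hi as <-. exact (IH _ _ Hr').
Qed.

Lemma term_record_sound (t : nat) : forall l v,
  M (rcode 0 t (code_list l) v) -> teval (list_env l) (decode_term t) = v.
Proof.
  induction t as [t IH] using lt_wf_ind. intros l v Hr.
  destruct (justified_inv _ _ _ _ _ HM Hr) as [[_ H]|[[? _]|[? _]]]; try discriminate.
  destruct H as [[-> ->]|(g & tag & r & u & u' & -> & Hg & Hr' & H)]; [reflexivity|].
  pose proof (pair2_half_le _ _ _ Hg) as [Ltag Lr].
  pose proof (pair2_half_le _ _ _ Hr') as [Lu Lu'].
  rewrite decode_term_unfold; unfold term_step.
  rewrite (unpair_pair2 _ _ _ Hg), (unpair_pair2 _ _ _ Hr').
  destruct H as [[-> H]|[[-> (w & H & ->)]|[[-> (w1 & w2 & H1 & H2 & ->)]|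
                 [[-> (w1 & w2 & H1 & H2 & ->)]|[Ht ->]]]]]; simpl.
  - now apply var_record_sound.
  - f_equal. apply (IH r); auto; lia.
  - f_equal; [apply (IH u)|apply (IH u')]; auto; lia.
  - f_equal; [apply (IH u)|apply (IH u')]; auto; lia.
  - now destruct tag as [|[|[|[|tag]]]]; try lia.
Qed.

Lemma formula_record_sound (f : nat) : forall l b,
  M (rcode 1 f (code_list l) b) -> truth_bit b (sat no_reals (list_env l) (decode_formula f)).
Proof.
  induction f as [f IH] using lt_wf_ind. intros l b Hr.
  destruct (justified_inv _ _ _ _ _ HM Hr) as [[? _]|[[_ H]|[? _]]]; try discriminate.
  destruct H as [[-> ->]|(g & tag & r & u & u' & -> & Hg & Hr' & H)].
  { right. split; [reflexivity|]. simpl. lia. }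
  pose proof (pair2_half_le _ _ _ Hg) as [Ltag Lr].
  pose proof (pair2_half_le _ _ _ Hr') as [Lu Lu'].
  rewrite decode_formula_unfold; unfold formula_step.
  rewrite (unpair_pair2 _ _ _ Hg), (unpair_pair2 _ _ _ Hr').
  specialize (IH r ltac:(lia)) as IHr; specialize (IH u ltac:(lia)) as IHu;
    specialize (IH u' ltac:(lia)) as IHu'.
  unfold truth_bit in *.
  destruct H as [[-> H]|[[-> H]|[[-> H]|[[-> H]|[[-> H]|[[-> H]|[[-> H]|[Ht ->]]]]]]]];
    cbn [sat].
  - destruct H as (w1 & w2 & H1 & H2 & H).
    apply term_record_sound in H1, H2. rewrite H1, H2. lia.
  - destruct H as (w1 & w2 & H1 & H2 & H).
    apply term_record_sound in H1, H2. rewrite H1, H2. lia.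
  - destruct H as [[-> H]|[-> H]]; apply IHr in H; intuition congruence.
  - destruct H as [[-> [H1 H2]]|[-> [H1|H1]]];
      [apply IHu in H1; apply IHu' in H2|apply IHu in H1|apply IHu' in H1]; intuition congruence.
  - destruct H as [[-> [H1|H1]]|[-> [H1 H2]]];
      [apply IHu in H1|apply IHu' in H1|apply IHu in H1; apply IHu' in H2]; intuition congruence.
  - destruct H as (w & Hw & H). apply term_record_sound in Hw. rewrite Hw.
    setoid_rewrite sat_list_env_cons.
    destruct H as [[-> (a & Ha & H)]|[-> H]].
    + apply (IHu' (a :: l)) in H. left. split; [reflexivity|]. exists a. intuition congruence.
    + right. split; [reflexivity|]. intros (a & Ha & Hs).
      pose proof (IHu' (a :: l) _ (H a Ha)). intuition congruence.
  - destruct H as (w & Hw & H). apply term_record_sound in Hw. rewrite Hw.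
    setoid_rewrite sat_list_env_cons.
    destruct H as [[-> H]|[-> (a & Ha & H)]].
    + left. split; [reflexivity|]. intros a Ha.
      pose proof (IHu' (a :: l) _ (H a Ha)). intuition congruence.
    + apply (IHu' (a :: l)) in H. right. split; [reflexivity|]. intros Hs.
      specialize (Hs a Ha). intuition congruence.
  - right. split; [reflexivity|].
    destruct tag as [|[|[|[|[|[|[|[|tag]]]]]]]]; try lia; simpl; [discriminate|lia].
Qed.

End Soundness.

Definition closed_list (L : list nat) : Prop := self_justifying (fun x => In x L).

Definition certified (j : nat) : Prop := exists L, closed_list L /\ In j L.

Lemma closed_list_app (L1 L2 : list nat) :
  closed_list L1 -> closed_list L2 -> closed_list (L1 ++ L2).
Proof.
  intros H1 H2 j Hj. apply in_app_or in Hj as [Hj|Hj];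
    (eapply justified_mono; [|apply H1 + apply H2; exact Hj]); intros; apply in_or_app; auto.
Qed.

Lemma certified_all (js : list nat) : Forall certified js -> exists L, closed_list L /\ incl js L.
Proof.
  induction 1 as [|j js (L1 & H1 & I1) _ (L2 & H2 & I2)].
  - exists nil. split; [intros ? []|apply incl_nil_l].
  - exists (L1 ++ L2). split; [now apply closed_list_app|].
    apply incl_cons; [apply in_or_app; auto|now apply incl_appr].
Qed.

Lemma certified_intro (js : list nat) (j : nat) : Forall certified js ->
  (forall L, incl js L -> justified (fun x => In x L) j) -> certified j.
Proof.
  intros Hjs Hj. destruct (certified_all js Hjs) as (L & HL & Hincl).
  exists (j :: L). split; [|now left].
  intros x [<-|Hx]; (eapply justified_mono; [|apply Hj, Hincl + apply HL, Hx]);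
    intros; now right.
Qed.

Ltac certify_from js :=
  apply (certified_intro js);
  [repeat apply Forall_cons; try apply Forall_nil
  |let L := fresh "L" in let HL := fresh "HL" in intros L HL].

Ltac node g tag r u u' :=
  right; exists g, tag, r, u, u'; split; [reflexivity|]; split; [assumption|];
  split; [assumption|].

Lemma var_certificate (l : list nat) (i : nat) : certified (rcode 2 i (code_list l) (list_env l i)).
Proof.
  revert i; induction l as [|a l IH]; intros i.
  - assert (list_env nil i = 0) as -> by now destruct i.
    certify_from (@nil nat). apply justify_var. now left.
  - destruct i as [|i].
    + certify_from (@nil nat). apply justify_var. right. exists a, (code_list l). auto.
    + certify_from [rcode 2 i (code_list l) (list_env l i)]; [apply IH|].
      apply justify_var. right. exists a, (code_list l). split; [reflexivity|].
      right. exists i. split; [reflexivity|]. apply HL. now left.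
Qed.

Lemma term_certificate (t : nat) : forall l,
  certified (rcode 0 t (code_list l) (teval (list_env l) (decode_term t))).
Proof.
  induction t as [t IH] using lt_wf_ind; intros l.
  destruct t as [|g].
  { certify_from (@nil nat). apply justify_term. now left. }
  destruct (unpair_double g) as (tag & r & Hg & Eg).
  destruct (unpair_double r) as (u & u' & Hr & Er).
  pose proof (pair2_half_le _ _ _ Hg) as [Ltag Lr].
  pose proof (pair2_half_le _ _ _ Hr) as [Lu Lu'].
  rewrite decode_term_unfold; unfold term_step; rewrite Eg, Er.
  set (s := code_list l); set (val x := teval (list_env l) (decode_term x)).
  destruct tag as [|[|[|[|tag]]]]; cbn [teval].
  - certify_from [rcode 2 r s (list_env l r)]; [apply var_certificate|].
    apply justify_term. node g 0 r u u'. left. split; [reflexivity|]. apply HL. now left.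
  - certify_from [rcode 0 r s (val r)]; [apply IH; lia|].
    apply justify_term. node g 1 r u u'. right; left. split; [reflexivity|].
    exists (val r). split; [apply HL; now left|reflexivity].
  - certify_from [rcode 0 u s (val u); rcode 0 u' s (val u')]; [apply IH; lia..|].
    apply justify_term. node g 2 r u u'. do 2 right; left. split; [reflexivity|].
    exists (val u), (val u'). split; [apply HL; now left|]. split; [apply HL; right; now left|reflexivity].
  - certify_from [rcode 0 u s (val u); rcode 0 u' s (val u')]; [apply IH; lia..|].
    apply justify_term. node g 3 r u u'. do 3 right; left. split; [reflexivity|].
    exists (val u), (val u'). split; [apply HL; now left|]. split; [apply HL; right; now left|reflexivity].
  - certify_from (@nil nat). apply justify_term. node g (S (S (S (S tag)))) r u u'.
    do 4 right. split; [lia|reflexivity].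
Qed.

Definition certifiable (f : nat) : Prop := forall l b,
  truth_bit b (sat no_reals (list_env l) (decode_formula f)) -> certified (rcode 1 f (code_list l) b).

Section FormulaNodeCertificates.
Variables (g r u u' : nat) (l : list nat).
Hypothesis Hr : r + r = pair2 u u'.

Notation holds x := (sat no_reals (list_env l) (decode_formula x)).
Notation s := (code_list l).

Lemma eq_certificate (b : nat) : g + g = pair2 0 r ->
  truth_bit b (teval (list_env l) (decode_term u) = teval (list_env l) (decode_term u')) ->
  certified (rcode 1 (S g) s b).
Proof.
  intros Hg Hb. unfold truth_bit in Hb.
  set (w := teval (list_env l) (decode_term u)) in *.
  set (w' := teval (list_env l) (decode_term u')) in *.
  certify_from [rcode 0 u s w; rcode 0 u' s w']; [apply term_certificate..|].
  apply justify_formula. node g 0 r u u'. left. split; [reflexivity|].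
  exists w, w'. split; [apply HL; now left|]. split; [apply HL; right; now left|]. lia.
Qed.

Lemma lt_certificate (b : nat) : g + g = pair2 1 r ->
  truth_bit b (teval (list_env l) (decode_term u) < teval (list_env l) (decode_term u')) ->
  certified (rcode 1 (S g) s b).
Proof.
  intros Hg Hb. unfold truth_bit in Hb.
  set (w := teval (list_env l) (decode_term u)) in *.
  set (w' := teval (list_env l) (decode_term u')) in *.
  certify_from [rcode 0 u s w; rcode 0 u' s w']; [apply term_certificate..|].
  apply justify_formula. node g 1 r u u'. right; left. split; [reflexivity|].
  exists w, w'. split; [apply HL; now left|]. split; [apply HL; right; now left|]. lia.
Qed.

Lemma not_certificate (b : nat) : g + g = pair2 2 r -> certifiable r ->
  truth_bit b (~ holds r) -> certified (rcode 1 (S g) s b).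
Proof.
  intros Hg IHr [[-> H]|[-> H]].
  - certify_from [rcode 1 r s 0]; [apply IHr; now right|].
    apply justify_formula. node g 2 r u u'. do 2 right; left. split; [reflexivity|].
    left. split; [reflexivity|]. apply HL. now left.
  - certify_from [rcode 1 r s 1]; [apply IHr; left; split; [reflexivity|now apply NNPP]|].
    apply justify_formula. node g 2 r u u'. do 2 right; left. split; [reflexivity|].
    right. split; [reflexivity|]. apply HL. now left.
Qed.

Lemma and_certificate (b : nat) : g + g = pair2 3 r -> certifiable u -> certifiable u' ->
  truth_bit b (holds u /\ holds u') -> certified (rcode 1 (S g) s b).
Proof.
  intros Hg IHu IHu' [[-> [H1 H2]]|[-> H]].
  - certify_from [rcode 1 u s 1; rcode 1 u' s 1]; [apply IHu|apply IHu'|]; [now left..|].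
    apply justify_formula. node g 3 r u u'. do 3 right; left. split; [reflexivity|].
    left. split; [reflexivity|]. split; apply HL; simpl; auto.
  - destruct (classic (holds u)) as [H1|H1].
    + certify_from [rcode 1 u' s 0]; [apply IHu'; right; split; [reflexivity|tauto]|].
      apply justify_formula. node g 3 r u u'. do 3 right; left. split; [reflexivity|].
      right. split; [reflexivity|]. right. apply HL. now left.
    + certify_from [rcode 1 u s 0]; [apply IHu; now right|].
      apply justify_formula. node g 3 r u u'. do 3 right; left. split; [reflexivity|].
      right. split; [reflexivity|]. left. apply HL. now left.
Qed.

Lemma or_certificate (b : nat) : g + g = pair2 4 r -> certifiable u -> certifiable u' ->
  truth_bit b (holds u \/ holds u') -> certified (rcode 1 (S g) s b).
Proof.
  intros Hg IHu IHu' [[-> H]|[-> H]].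
  - destruct (classic (holds u)) as [H1|H1].
    + certify_from [rcode 1 u s 1]; [apply IHu; now left|].
      apply justify_formula. node g 4 r u u'. do 4 right; left. split; [reflexivity|].
      left. split; [reflexivity|]. left. apply HL. now left.
    + certify_from [rcode 1 u' s 1]; [apply IHu'; left; split; [reflexivity|tauto]|].
      apply justify_formula. node g 4 r u u'. do 4 right; left. split; [reflexivity|].
      left. split; [reflexivity|]. right. apply HL. now left.
  - certify_from [rcode 1 u s 0; rcode 1 u' s 0];
      [apply IHu|apply IHu'|]; [right; split; [reflexivity|tauto]..|].
    apply justify_formula. node g 4 r u u'. do 4 right; left. split; [reflexivity|].
    right. split; [reflexivity|]. split; apply HL; simpl; auto.
Qed.

Lemma bex_certificate (b : nat) : g + g = pair2 5 r -> certifiable u' ->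
  truth_bit b (exists a, a < teval (list_env l) (decode_term u) /\
                         sat no_reals (scons a (list_env l)) (decode_formula u')) ->
  certified (rcode 1 (S g) s b).
Proof.
  intros Hg IHu' Hb. set (w := teval (list_env l) (decode_term u)) in *.
  destruct Hb as [[-> (a & Ha & H)]|[-> H]].
  - certify_from [rcode 0 u s w; rcode 1 u' (code_list (a :: l)) 1];
      [apply term_certificate|apply IHu'; left; split; [reflexivity|now apply sat_list_env_cons]|].
    apply justify_formula. node g 5 r u u'. do 5 right; left. split; [reflexivity|].
    exists w. split; [apply HL; now left|]. left. split; [reflexivity|].
    exists a. split; [exact Ha|]. apply HL. right. now left.
  - certify_from (rcode 0 u s w :: map (fun a => rcode 1 u' (code_list (a :: l)) 0) (seq 0 w)).
    { apply term_certificate. }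
    { apply Forall_map, Forall_forall. intros a Ha%in_seq. apply IHu'. right.
      split; [reflexivity|]. intros Hs. apply H. exists a. split; [lia|now apply sat_list_env_cons]. }
    apply justify_formula. node g 5 r u u'. do 5 right; left. split; [reflexivity|].
    exists w. split; [apply HL; now left|]. right. split; [reflexivity|].
    intros a Ha. apply HL. right. apply in_map_iff. exists a. split; [reflexivity|]. apply in_seq. lia.
Qed.

Lemma ball_certificate (b : nat) : g + g = pair2 6 r -> certifiable u' ->
  truth_bit b (forall a, a < teval (list_env l) (decode_term u) ->
                         sat no_reals (scons a (list_env l)) (decode_formula u')) ->
  certified (rcode 1 (S g) s b).
Proof.
  intros Hg IHu' Hb. set (w := teval (list_env l) (decode_term u)) in *.
  destruct Hb as [[-> H]|[-> H]].
  - certify_from (rcode 0 u s w :: map (fun a => rcode 1 u' (code_list (a :: l)) 1) (seq 0 w)).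
    { apply term_certificate. }
    { apply Forall_map, Forall_forall. intros a Ha%in_seq. apply IHu'. left.
      split; [reflexivity|]. apply sat_list_env_cons, H. lia. }
    apply justify_formula. node g 6 r u u'. do 6 right; left. split; [reflexivity|].
    exists w. split; [apply HL; now left|]. left. split; [reflexivity|].
    intros a Ha. apply HL. right. apply in_map_iff. exists a. split; [reflexivity|]. apply in_seq. lia.
  - apply not_all_ex_not in H as (a & Ha). apply imply_to_and in Ha as [Ha Hs].
    certify_from [rcode 0 u s w; rcode 1 u' (code_list (a :: l)) 0];
      [apply term_certificate|apply IHu'; right; split; [reflexivity|now rewrite <- sat_list_env_cons]|].
    apply justify_formula. node g 6 r u u'. do 6 right; left. split; [reflexivity|].
    exists w. split; [apply HL; now left|]. right. split; [reflexivity|].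
    exists a. split; [exact Ha|]. apply HL. right. now left.
Qed.

End FormulaNodeCertificates.

Lemma formula_certificate (f : nat) : certifiable f.
Proof.
  induction f as [f IH] using lt_wf_ind; intros l b Hb.
  destruct f as [|g].
  { destruct Hb as [[_ H]|[-> _]]; [simpl in H; lia|].
    certify_from (@nil nat). apply justify_formula. now left. }
  destruct (unpair_double g) as (tag & r & Hg & Eg).
  destruct (unpair_double r) as (u & u' & Hr & Er).
  pose proof (pair2_half_le _ _ _ Hg) as [Ltag Lr].
  pose proof (pair2_half_le _ _ _ Hr) as [Lu Lu'].
  rewrite decode_formula_unfold in Hb; unfold formula_step in Hb; rewrite Eg, Er in Hb.
  assert (IHr : certifiable r) by (apply IH; lia).
  assert (IHu : certifiable u) by (apply IH; lia).
  assert (IHu' : certifiable u') by (apply IH; lia).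
  destruct tag as [|[|[|[|[|[|[|tag]]]]]]]; cbn [sat] in Hb.
  - exact (eq_certificate g r u u' l Hr b Hg Hb).
  - exact (lt_certificate g r u u' l Hr b Hg Hb).
  - exact (not_certificate g r u u' l Hr b Hg IHr Hb).
  - exact (and_certificate g r u u' l Hr b Hg IHu IHu' Hb).
  - exact (or_certificate g r u u' l Hr b Hg IHu IHu' Hb).
  - exact (bex_certificate g r u u' l Hr b Hg IHu' Hb).
  - exact (ball_certificate g r u u' l Hr b Hg IHu' Hb).
  - assert (b = 0) as ->.
    { destruct Hb as [[_ H]|[-> _]]; [|reflexivity].
      destruct tag; simpl in H; [unfold no_reals in H; discriminate|lia]. }
    certify_from (@nil nat). apply justify_formula. node g (7 + tag) r u u'.
    do 7 right. split; [lia|reflexivity].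
Qed.

(** * Coding finite sets of numbers *)

Lemma divide_fact (m k : nat) : 1 <= k <= m -> Nat.divide k (fact m).
Proof.
  revert k; induction m; intros k Hk; [lia|].
  simpl fact. destruct (Nat.eq_dec k (S m)) as [->|Hne].
  - exists (fact m). lia.
  - apply Nat.divide_add_r; [apply IHm; lia|]. apply Nat.divide_mul_r, IHm. lia.
Qed.

(* Goedel's moduli: for [d = m!] the numbers [modulus d x], [x < m], are
   pairwise coprime, so a finite set below [m] is coded by the product of
   the moduli of its elements. *)
Definition modulus (d x : nat) : nat := S (S x * d).

Lemma modulus_coprime (m x y : nat) : x < y < m ->
  Nat.gcd (modulus (fact m) x) (modulus (fact m) y) = 1.
Proof.
  intros Hxy. set (d := fact m). set (g := Nat.gcd (modulus d x) (modulus d y)).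
  assert (Gx : Nat.divide g (modulus d x)) by apply Nat.gcd_divide_l.
  assert (Gy : Nat.divide g (modulus d y)) by apply Nat.gcd_divide_r.
  assert (Hgd : Nat.gcd g d = 1).
  { apply Nat.divide_1_r, (Nat.divide_add_cancel_r _ (S x * d)).
    - apply Nat.divide_mul_r, Nat.gcd_divide_r.
    - replace (S x * d + 1) with (modulus d x) by (unfold modulus; lia).
      eapply Nat.divide_trans; [apply Nat.gcd_divide_l|exact Gx]. }
  assert (Hdiff : Nat.divide g (d * (y - x))).
  { apply (Nat.divide_add_cancel_r _ (modulus d x)); [exact Gx|].
    replace (modulus d x + d * (y - x)) with (modulus d y) by (unfold modulus; nia). exact Gy. }
  apply Nat.gauss in Hdiff; [|exact Hgd].
  assert (Hgd' : Nat.divide g d) by (eapply Nat.divide_trans; [exact Hdiff|apply divide_fact; lia]).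
  apply Nat.divide_1_r. rewrite <- Hgd. apply Nat.gcd_greatest; [apply Nat.divide_refl|exact Hgd'].
Qed.

Fixpoint prod_moduli (d : nat) (L : list nat) : nat :=
  match L with nil => 1 | y :: L' => modulus d y * prod_moduli d L' end.

Lemma modulus_divides_prod_moduli (m : nat) (L : list nat) (x : nat) :
  (forall y, In y L -> y < m) -> x < m ->
  (Nat.divide (modulus (fact m) x) (prod_moduli (fact m) L) <-> In x L).
Proof.
  intros HL Hx. split.
  - induction L as [|y L IH]; cbn [prod_moduli]; intros Hd.
    + apply Nat.divide_1_r in Hd. unfold modulus in Hd. pose proof (lt_O_fact m). nia.
    + destruct (Nat.eq_dec x y) as [->|Hne]; [now left|right].
      apply IH; [intros; apply HL; now right|].
      apply Nat.gauss with (modulus (fact m) y); [exact Hd|].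
      assert (y < m) by (apply HL; now left).
      destruct (proj1 (Nat.lt_gt_cases x y) Hne) as [Hlt|Hlt]; [|rewrite Nat.gcd_comm];
        apply modulus_coprime; lia.
  - clear HL. induction L as [|y L IH]; intros Hin; [destruct Hin|cbn [prod_moduli]].
    destruct Hin as [->|Hin]; [apply Nat.divide_mul_l, Nat.divide_refl|].
    apply Nat.divide_mul_r, IH, Hin.
Qed.

Lemma list_coded (L : list nat) : exists c d m, forall x,
  (x < m /\ Nat.divide (modulus d x) c) <-> In x L.
Proof.
  set (m := S (list_max L)).
  assert (HL : forall y, In y L -> y < m).
  { intros y Hy. pose proof (proj1 (list_max_le L _) (le_n _)) as Hmax.
    rewrite Forall_forall in Hmax. specialize (Hmax y Hy). unfold m. lia. }
  exists (prod_moduli (fact m) L), (fact m), m. intros x. split.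
  - intros [Hx Hd]. now apply (modulus_divides_prod_moduli m L x HL Hx).
  - intros Hin. split; [now apply HL|]. now apply modulus_divides_prod_moduli; auto.
Qed.

(** * A Sigma^0_1 truth predicate for bounded formulas *)

Fixpoint num (n : nat) : term := match n with 0 => tzero | S k => tsucc (num k) end.

Definition tpair2 (a b : term) : term :=
  tplus (tmult (tplus a b) (tsucc (tplus a b))) (tplus b b).

Definition trcode (k x s v : term) : term := tpair2 (tpair2 k x) (tpair2 s v).

(* [c], [d], [m] code the finite set of all [x < m] whose modulus divides [c];
   the bound [q <= c] keeps the formula below bounded. *)
Definition coded_mem (c d m x : nat) : Prop :=
  x < m /\ exists q, q < S c /\ q * modulus d x = c.

Lemma coded_mem_iff (c d m x : nat) :
  coded_mem c d m x <-> x < m /\ Nat.divide (modulus d x) c.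
Proof.
  unfold coded_mem, modulus. split; intros [Hx (q & Hq)]; split; auto.
  - exists q. lia.
  - exists q. split; [nia|lia].
Qed.

(* Free variables: 0 = c, 1 = d, 2 = m, 3 = x. *)
Definition coded_mem_f : formula :=
  fand (flt (tvar 3) (tvar 2))
       (fbex (tsucc (tvar 0)) (feq (tmult (tvar 0) (tsucc (tmult (tsucc (tvar 4)) (tvar 2)))) (tvar 1))).

Definition mem_at (c d m x : term) : formula := fsubst_list [c; d; m; x] coded_mem_f.

(* The clauses of [justified], with every quantifier bounded: the components of
   a record are below the record, and values are below the bound [m] of the set. *)
Section BoundedJustification.
Variables (M : nat -> Prop) (m : nat).

Definition justifies_var_b (i s v : nat) : Prop :=
  (s = 0 /\ v = 0) \/
  exists a, a < S s /\ exists s', s' < S s /\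
   (s = S (pair2 a s') /\ ((i = 0 /\ v = a) \/ exists i', i' < i /\ (i = S i' /\ M (rcode 2 i' s' v)))).

Definition justifies_term_b (t s v : nat) : Prop :=
  (t = 0 /\ v = 0) \/
  exists g, g < t /\ exists tag, tag < t /\ exists r, r < t /\ exists u, u < t /\ exists u', u' < t /\
  (t = S g /\ (g + g = pair2 tag r /\ (r + r = pair2 u u' /\
   ((tag = 0 /\ M (rcode 2 r s v))
 \/ ((tag = 1 /\ exists w, w < m /\ (M (rcode 0 r s w) /\ v = S w))
 \/ ((tag = 2 /\ exists w1, w1 < m /\ exists w2, w2 < m /\
        (M (rcode 0 u s w1) /\ (M (rcode 0 u' s w2) /\ v = w1 + w2)))
 \/ ((tag = 3 /\ exists w1, w1 < m /\ exists w2, w2 < m /\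
        (M (rcode 0 u s w1) /\ (M (rcode 0 u' s w2) /\ v = w1 * w2)))
 \/ (3 < tag /\ v = 0)))))))).

Definition justifies_formula_b (f s b : nat) : Prop :=
  (f = 0 /\ b = 0) \/
  exists g, g < f /\ exists tag, tag < f /\ exists r, r < f /\ exists u, u < f /\ exists u', u' < f /\
  (f = S g /\ (g + g = pair2 tag r /\ (r + r = pair2 u u' /\
   ((tag = 0 /\ exists w1, w1 < m /\ exists w2, w2 < m /\ (M (rcode 0 u s w1) /\ (M (rcode 0 u' s w2) /\
        ((b = 1 /\ w1 = w2) \/ (b = 0 /\ (w1 < w2 \/ w2 < w1))))))
 \/ ((tag = 1 /\ exists w1, w1 < m /\ exists w2, w2 < m /\ (M (rcode 0 u s w1) /\ (M (rcode 0 u' s w2) /\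
        ((b = 1 /\ w1 < w2) \/ (b = 0 /\ w2 < S w1)))))
 \/ ((tag = 2 /\ ((b = 1 /\ M (rcode 1 r s 0)) \/ (b = 0 /\ M (rcode 1 r s 1))))
 \/ ((tag = 3 /\ ((b = 1 /\ (M (rcode 1 u s 1) /\ M (rcode 1 u' s 1))) \/
                 (b = 0 /\ (M (rcode 1 u s 0) \/ M (rcode 1 u' s 0)))))
 \/ ((tag = 4 /\ ((b = 1 /\ (M (rcode 1 u s 1) \/ M (rcode 1 u' s 1))) \/
                 (b = 0 /\ (M (rcode 1 u s 0) /\ M (rcode 1 u' s 0)))))
 \/ ((tag = 5 /\ exists w, w < m /\ (M (rcode 0 u s w) /\
        ((b = 1 /\ exists a, a < w /\ M (rcode 1 u' (S (pair2 a s)) 1)) \/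
         (b = 0 /\ forall a, a < w -> M (rcode 1 u' (S (pair2 a s)) 0)))))
 \/ ((tag = 6 /\ exists w, w < m /\ (M (rcode 0 u s w) /\
        ((b = 1 /\ forall a, a < w -> M (rcode 1 u' (S (pair2 a s)) 1)) \/
         (b = 0 /\ exists a, a < w /\ M (rcode 1 u' (S (pair2 a s)) 0)))))
 \/ (6 < tag /\ b = 0))))))))))).

Definition justified_b (j : nat) : Prop :=
  exists k, k < m /\ exists x, x < m /\ exists s, s < m /\ exists v, v < m /\
  (j = rcode k x s v /\ ((k = 0 /\ justifies_term_b x s v) \/
     ((k = 1 /\ justifies_formula_b x s v) \/ (k = 2 /\ justifies_var_b x s v)))).

End BoundedJustification.

(* Free variables of [justifies_var_f], [justifies_term_f] and [justifies_formula_f]: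
   0 = object, 1 = environment code, 2 = value, 3, 4, 5 = the code (c, d, m) of
   the set of records. *)
Definition justifies_var_f : formula :=
 forr (fand (feq (tvar 1) tzero) (feq (tvar 2) tzero))
  (fbex (tsucc (tvar 1))
   (fbex (tsucc (tvar 2))
    (fand (feq (tvar 3) (tsucc (tpair2 (tvar 1) (tvar 0))))
     (forr (fand (feq (tvar 2) tzero) (feq (tvar 4) (tvar 1)))
      (fbex (tvar 2)
       (fand (feq (tvar 3) (tsucc (tvar 0)))
        (mem_at (tvar 6) (tvar 7) (tvar 8) (trcode (num 2) (tvar 0) (tvar 1) (tvar 5))))))))).

(* Binds u' = 0, u = 1, r = 2, tag = 3, g = 4 in [body], where the object is
   [S g] and [g], [r] are the pairs (tag, r), (u, u'). *)
Definition node_prefix (body : formula) : formula :=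
 fbex (tvar 0) (fbex (tvar 1) (fbex (tvar 2) (fbex (tvar 3) (fbex (tvar 4)
  (fand (feq (tvar 5) (tsucc (tvar 4)))
  (fand (feq (tplus (tvar 4) (tvar 4)) (tpair2 (tvar 3) (tvar 2)))
  (fand (feq (tplus (tvar 2) (tvar 2)) (tpair2 (tvar 1) (tvar 0)))
   body))))))).

(* Membership in the set of records, under [k] further binders below a node prefix. *)
Definition mem_under (k : nat) (x : term) : formula :=
  mem_at (tvar (8 + k)) (tvar (9 + k)) (tvar (10 + k)) x.

Definition justifies_term_f : formula :=
 forr (fand (feq (tvar 0) tzero) (feq (tvar 2) tzero))
 (node_prefix
  (forr (fand (feq (tvar 3) tzero) (mem_under 0 (trcode (num 2) (tvar 2) (tvar 6) (tvar 7))))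
  (forr (fand (feq (tvar 3) (num 1)) (fbex (tvar 10)
          (fand (mem_under 1 (trcode tzero (tvar 3) (tvar 7) (tvar 0))) (feq (tvar 8) (tsucc (tvar 0))))))
  (forr (fand (feq (tvar 3) (num 2)) (fbex (tvar 10) (fbex (tvar 11)
          (fand (mem_under 2 (trcode tzero (tvar 3) (tvar 8) (tvar 1)))
           (fand (mem_under 2 (trcode tzero (tvar 2) (tvar 8) (tvar 0)))
            (feq (tvar 9) (tplus (tvar 1) (tvar 0))))))))
  (forr (fand (feq (tvar 3) (num 3)) (fbex (tvar 10) (fbex (tvar 11)
          (fand (mem_under 2 (trcode tzero (tvar 3) (tvar 8) (tvar 1)))
           (fand (mem_under 2 (trcode tzero (tvar 2) (tvar 8) (tvar 0)))
            (feq (tvar 9) (tmult (tvar 1) (tvar 0))))))))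
   (fand (flt (num 3) (tvar 3)) (feq (tvar 7) tzero))))))).

Definition justifies_formula_f : formula :=
 forr (fand (feq (tvar 0) tzero) (feq (tvar 2) tzero))
 (node_prefix
  (forr (fand (feq (tvar 3) tzero) (fbex (tvar 10) (fbex (tvar 11)
          (fand (mem_under 2 (trcode tzero (tvar 3) (tvar 8) (tvar 1)))
           (fand (mem_under 2 (trcode tzero (tvar 2) (tvar 8) (tvar 0)))
            (forr (fand (feq (tvar 9) (num 1)) (feq (tvar 1) (tvar 0)))
                  (fand (feq (tvar 9) tzero) (forr (flt (tvar 1) (tvar 0)) (flt (tvar 0) (tvar 1))))))))))
  (forr (fand (feq (tvar 3) (num 1)) (fbex (tvar 10) (fbex (tvar 11)
          (fand (mem_under 2 (trcode tzero (tvar 3) (tvar 8) (tvar 1)))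
           (fand (mem_under 2 (trcode tzero (tvar 2) (tvar 8) (tvar 0)))
            (forr (fand (feq (tvar 9) (num 1)) (flt (tvar 1) (tvar 0)))
                  (fand (feq (tvar 9) tzero) (flt (tvar 0) (tsucc (tvar 1))))))))))
  (forr (fand (feq (tvar 3) (num 2))
          (forr (fand (feq (tvar 7) (num 1)) (mem_under 0 (trcode (num 1) (tvar 2) (tvar 6) tzero)))
                (fand (feq (tvar 7) tzero) (mem_under 0 (trcode (num 1) (tvar 2) (tvar 6) (num 1))))))
  (forr (fand (feq (tvar 3) (num 3))
          (forr (fand (feq (tvar 7) (num 1)) (fand (mem_under 0 (trcode (num 1) (tvar 1) (tvar 6) (num 1)))
                                                  (mem_under 0 (trcode (num 1) (tvar 0) (tvar 6) (num 1)))))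
                (fand (feq (tvar 7) tzero) (forr (mem_under 0 (trcode (num 1) (tvar 1) (tvar 6) tzero))
                                                  (mem_under 0 (trcode (num 1) (tvar 0) (tvar 6) tzero))))))
  (forr (fand (feq (tvar 3) (num 4))
          (forr (fand (feq (tvar 7) (num 1)) (forr (mem_under 0 (trcode (num 1) (tvar 1) (tvar 6) (num 1)))
                                                  (mem_under 0 (trcode (num 1) (tvar 0) (tvar 6) (num 1)))))
                (fand (feq (tvar 7) tzero) (fand (mem_under 0 (trcode (num 1) (tvar 1) (tvar 6) tzero))
                                                  (mem_under 0 (trcode (num 1) (tvar 0) (tvar 6) tzero))))))
  (forr (fand (feq (tvar 3) (num 5)) (fbex (tvar 10)
          (fand (mem_under 1 (trcode tzero (tvar 2) (tvar 7) (tvar 0)))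
           (forr (fand (feq (tvar 8) (num 1))
                   (fbex (tvar 0) (mem_under 2 (trcode (num 1) (tvar 2) (tsucc (tpair2 (tvar 0) (tvar 8))) (num 1)))))
                 (fand (feq (tvar 8) tzero)
                   (fball (tvar 0) (mem_under 2 (trcode (num 1) (tvar 2) (tsucc (tpair2 (tvar 0) (tvar 8))) tzero))))))))
  (forr (fand (feq (tvar 3) (num 6)) (fbex (tvar 10)
          (fand (mem_under 1 (trcode tzero (tvar 2) (tvar 7) (tvar 0)))
           (forr (fand (feq (tvar 8) (num 1))
                   (fball (tvar 0) (mem_under 2 (trcode (num 1) (tvar 2) (tsucc (tpair2 (tvar 0) (tvar 8))) (num 1)))))
                 (fand (feq (tvar 8) tzero)
                   (fbex (tvar 0) (mem_under 2 (trcode (num 1) (tvar 2) (tsucc (tpair2 (tvar 0) (tvar 8))) tzero))))))))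
   (fand (flt (num 6) (tvar 3)) (feq (tvar 7) tzero)))))))))).

(* Free variables: 0 = record, 1, 2, 3 = the code (c, d, m) of the set of records. *)
Definition justified_f : formula :=
 fbex (tvar 3) (fbex (tvar 4) (fbex (tvar 5) (fbex (tvar 6)
   (fand (feq (tvar 4) (trcode (tvar 3) (tvar 2) (tvar 1) (tvar 0)))
    (forr (fand (feq (tvar 3) tzero)
                (fsubst_list [tvar 2; tvar 1; tvar 0; tvar 5; tvar 6; tvar 7] justifies_term_f))
     (forr (fand (feq (tvar 3) (num 1))
                 (fsubst_list [tvar 2; tvar 1; tvar 0; tvar 5; tvar 6; tvar 7] justifies_formula_f))
           (fand (feq (tvar 3) (num 2))
                 (fsubst_list [tvar 2; tvar 1; tvar 0; tvar 5; tvar 6; tvar 7] justifies_var_f)))))))).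

Definition self_justifying_code (c d m : nat) : Prop :=
  forall j, j < m -> ~ coded_mem c d m j \/ justified_b (coded_mem c d m) m j.

(* Free variables: 0, 1, 2 = c, d, m. *)
Definition self_justifying_code_f : formula :=
  fball (tvar 2) (forr (fnot (mem_at (tvar 1) (tvar 2) (tvar 3) (tvar 0)))
                       (fsubst_list [tvar 0; tvar 1; tvar 2; tvar 3] justified_f)).

(* Free variables: 0 = environment code, 1 = formula code. *)
Definition truth_f (b : nat) : formula :=
  fex (fbex (tvar 0) (fbex (tvar 1) (fbex (tvar 2)
    (fand (fsubst_list [tvar 2; tvar 1; tvar 0] self_justifying_code_f)
          (mem_at (tvar 2) (tvar 1) (tvar 0) (trcode (num 1) (tvar 5) (tvar 4) (num b))))))).

(* Each formula above evaluates by computation to its bounded predicate. *)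
Lemma sat_truth_f (xi : nat -> nat -> bool) (rho : nat -> nat) (b : nat) : b <= 1 ->
  sat xi rho (truth_f b) <->
  exists w c, c < w /\ exists d, d < w /\ exists m, m < w /\
    (self_justifying_code c d m /\ coded_mem c d m (rcode 1 (rho 1) (rho 0) b)).
Proof. intros Hb. destruct b as [|[|b]]; [reflexivity|reflexivity|lia]. Qed.

Lemma truth_f_Sigma1 (b : nat) : is_Sigma 1 (truth_f b).
Proof.
  simpl. repeat split; apply bounded_fsubst; simpl; repeat split;
    apply bounded_fsubst; simpl; tauto.
Qed.

Lemma justified_b_justified (M : nat -> Prop) (m j : nat) : justified_b M m j -> justified M j.
Proof.
  intros (k & _ & x & _ & s & _ & v & _ & E & H). exists k, x, s, v. split; auto.
  destruct H as [[Hk H]|[[Hk H]|[Hk H]]]; [left|right;left|right;right]; split; auto.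
  - destruct H as [H|(g & _ & tag & _ & r & _ & u & _ & u' & _ & E1 & E2 & E3 & H)]; [left; auto|right].
    exists g, tag, r, u, u'; repeat (split; [assumption|]).
    destruct H as [H|[H|[H|[H|H]]]].
    + left; auto.
    + right; left. destruct H as (? & w & _ & ?). split; eauto.
    + do 2 right; left. destruct H as (? & w1 & _ & w2 & _ & ?). split; eauto.
    + do 3 right; left. destruct H as (? & w1 & _ & w2 & _ & ?). split; eauto.
    + do 4 right; auto.
  - destruct H as [H|(g & _ & tag & _ & r & _ & u & _ & u' & _ & E1 & E2 & E3 & H)]; [left; auto|right].
    exists g, tag, r, u, u'; repeat (split; [assumption|]).
    destruct H as [H|[H|[H|[H|[H|[H|[H|H]]]]]]].
    + left. destruct H as (? & w1 & _ & w2 & _ & ?). split; eauto.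
    + right; left. destruct H as (? & w1 & _ & w2 & _ & ?). split; eauto.
    + do 2 right; left. tauto.
    + do 3 right; left. tauto.
    + do 4 right; left. tauto.
    + do 5 right; left. destruct H as (? & w & _ & ?). split; eauto.
    + do 6 right; left. destruct H as (? & w & _ & ?). split; eauto.
    + do 7 right. auto.
  - destruct H as [H|(a & _ & s' & _ & E1 & H)]; [left; auto|right].
    exists a, s'. split; auto. destruct H as [H|(i' & _ & H)]; [left; auto|right; eauto].
Qed.

Section Bounding.
Variables (M : nat -> Prop) (m : nat).
Hypothesis HM : forall x, M x -> x < m.

Ltac record_bounds H := let h := fresh in pose proof (HM _ H) as h;
  match type of H with M (rcode ?a ?b ?c ?d) => pose proof (rcode_ge a b c d) end.

Ltac node_bounds g tag r u u' E2 E3 :=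
  pose proof (pair2_half_le _ _ _ E2); pose proof (pair2_half_le _ _ _ E3);
  exists g; split; [lia|]; exists tag; split; [lia|]; exists r; split; [lia|];
  exists u; split; [lia|]; exists u'; split; [lia|];
  repeat (split; [assumption|]).

Lemma bound_justifies_term (t s v : nat) : justifies_term M t s v -> justifies_term_b M m t s v.
Proof.
  intros [H|(g & tag & r & u & u' & E1 & E2 & E3 & H)]; [now left|right].
  node_bounds g tag r u u' E2 E3.
  destruct H as [H|[H|[H|[H|H]]]].
  - now left.
  - right; left. destruct H as (? & w & Hm1 & ?). record_bounds Hm1.
    split; auto. exists w; split; [lia|]; auto.
  - do 2 right; left. destruct H as (? & w1 & w2 & Hm1 & Hm2 & ?). record_bounds Hm1. record_bounds Hm2.
    split; auto. exists w1; split; [lia|]. exists w2; split; [lia|]; auto.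
  - do 3 right; left. destruct H as (? & w1 & w2 & Hm1 & Hm2 & ?). record_bounds Hm1. record_bounds Hm2.
    split; auto. exists w1; split; [lia|]. exists w2; split; [lia|]; auto.
  - do 4 right; auto.
Qed.

Lemma bound_justifies_formula (f s b : nat) :
  justifies_formula M f s b -> justifies_formula_b M m f s b.
Proof.
  intros [H|(g & tag & r & u & u' & E1 & E2 & E3 & H)]; [now left|right].
  node_bounds g tag r u u' E2 E3.
  destruct H as [H|[H|[H|[H|[H|[H|[H|H]]]]]]].
  - left. destruct H as (? & w1 & w2 & Hm1 & Hm2 & ?). record_bounds Hm1. record_bounds Hm2.
    split; auto. exists w1; split; [lia|]. exists w2; split; [lia|]; auto.
  - right; left. destruct H as (? & w1 & w2 & Hm1 & Hm2 & ?). record_bounds Hm1. record_bounds Hm2.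
    split; auto. exists w1; split; [lia|]. exists w2; split; [lia|]; auto.
  - do 2 right; left. tauto.
  - do 3 right; left. tauto.
  - do 4 right; left. tauto.
  - do 5 right; left. destruct H as (? & w & Hm1 & ?). record_bounds Hm1.
    split; auto. exists w; split; [lia|]; auto.
  - do 6 right; left. destruct H as (? & w & Hm1 & ?). record_bounds Hm1.
    split; auto. exists w; split; [lia|]; auto.
  - do 7 right. auto.
Qed.

Lemma bound_justifies_var (i s v : nat) : justifies_var M i s v -> justifies_var_b M i s v.
Proof.
  intros [H|(a & s' & E1 & H)]; [now left|right].
  pose proof (pair2_ge a s').
  exists a; split; [lia|]. exists s'; split; [lia|]. split; auto.
  destruct H as [H|(i' & E2 & H)]; [now left|right]. exists i'; split; [lia|]; auto.
Qed.

Lemma justified_justified_b (j : nat) : j < m -> justified M j -> justified_b M m j.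
Proof.
  intros Hj (k & x & s & v & E & H). pose proof (rcode_ge k x s v).
  exists k; split; [lia|]. exists x; split; [lia|]. exists s; split; [lia|]. exists v; split; [lia|].
  split; [exact E|].
  destruct H as [[Hk H]|[[Hk H]|[Hk H]]]; [left|right; left|right; right]; split; auto.
  - now apply bound_justifies_term.
  - now apply bound_justifies_formula.
  - now apply bound_justifies_var.
Qed.

End Bounding.

Lemma truth_f_correct (xi : nat -> nat -> bool) (rho : nat -> nat) (l : list nat) (b : nat) :
  rho 0 = code_list l -> b <= 1 ->
  sat xi rho (truth_f b) <-> truth_bit b (sat no_reals (list_env l) (decode_formula (rho 1))).
Proof.
  intros Hl Hb. rewrite sat_truth_f by exact Hb. split.
  - intros (w & c & _ & d & _ & m & _ & Hc & Hm). rewrite Hl in Hm.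
    apply (formula_record_sound (coded_mem c d m)); [|exact Hm].
    intros j Hj. destruct (Hc j (proj1 Hj)) as [?|Hjb]; [contradiction|].
    exact (justified_b_justified _ _ _ Hjb).
  - intros Hbit. destruct (formula_certificate (rho 1) l b Hbit) as (L & HL & Hin).
    destruct (list_coded L) as (c & d & m & Hcode).
    assert (Hmem : forall x, coded_mem c d m x <-> In x L)
      by (intro x; rewrite coded_mem_iff; apply Hcode).
    exists (S (c + d + m)), c. split; [lia|]. exists d. split; [lia|].
    exists m. split; [lia|]. split.
    + intros j Hj. destruct (classic (coded_mem c d m j)) as [Hj'|Hj']; [right|now left].
      apply (justified_justified_b (coded_mem c d m) m (fun x Hx => proj1 Hx) j Hj).
      apply Hmem in Hj'. eapply justified_mono; [|exact (HL j Hj')].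
      intros x Hx. now apply Hmem.
    + apply Hmem. rewrite Hl. exact Hin.
Qed.

(** * Closure properties of Delta^0_0, Sigma^0_1, Pi^0_1 and Delta^0_1 *)

Definition env_pred : Type := (nat -> nat -> bool) -> (nat -> nat) -> Prop.

Definition defined_by (cls : formula -> Prop) (A : env_pred) : Prop :=
  exists p, cls p /\ forall xi rho, A xi rho <-> sat xi rho p.

Definition Delta0 : env_pred -> Prop := defined_by bounded.
Definition Sigma1 : env_pred -> Prop := defined_by (is_Sigma 1).
Definition Pi1 : env_pred -> Prop := defined_by (is_Pi 1).
Definition Delta1 (A : env_pred) : Prop := Sigma1 A /\ Pi1 A.

Lemma defined_by_ext (cls : formula -> Prop) (A B : env_pred) :
  (forall xi rho, B xi rho <-> A xi rho) -> defined_by cls A -> defined_by cls B.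
Proof. intros H (p & Hp & Hs). exists p. split; [exact Hp|]. intros. now rewrite H. Qed.

Lemma Delta0_ext (A B : env_pred) :
  (forall xi rho, B xi rho <-> A xi rho) -> Delta0 A -> Delta0 B.
Proof. apply defined_by_ext. Qed.

Lemma Sigma1_ext (A B : env_pred) :
  (forall xi rho, B xi rho <-> A xi rho) -> Sigma1 A -> Sigma1 B.
Proof. apply defined_by_ext. Qed.

Lemma Pi1_ext (A B : env_pred) :
  (forall xi rho, B xi rho <-> A xi rho) -> Pi1 A -> Pi1 B.
Proof. apply defined_by_ext. Qed.

Lemma Delta0_neg (A : env_pred) : Delta0 A -> Delta0 (fun xi rho => ~ A xi rho).
Proof. intros (p & Hp & Hs). exists (fnot p). split; [exact Hp|]. intros; simpl. now rewrite Hs. Qed.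

Lemma Delta0_and (A1 A2 : env_pred) : Delta0 A1 -> Delta0 A2 -> Delta0 (fun xi rho => A1 xi rho /\ A2 xi rho).
Proof.
  intros (p & Hp & Hs) (q & Hq & Hs'). exists (fand p q). split; [simpl; auto|].
  intros; simpl. now rewrite Hs, Hs'.
Qed.

Lemma Delta0_bex (A : env_pred) (t : term) :
  Delta0 A -> Delta0 (fun xi rho => exists x, x < teval rho t /\ A xi (scons x rho)).
Proof.
  intros (p & Hp & Hs). exists (fbex t p). split; [exact Hp|]. intros; simpl.
  setoid_rewrite Hs. reflexivity.
Qed.

Lemma Delta0_Sigma1 (A : env_pred) : Delta0 A -> Sigma1 A.
Proof.
  intros (p & Hp & Hs). exists (fex (fsubst (fun i => tvar (S i)) p)).
  split; [simpl; now apply bounded_fsubst|]. intros xi rho. rewrite Hs. simpl.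
  setoid_rewrite sat_fsubst. split; [intros H; now exists 0|intros [a H]; exact H].
Qed.

Lemma Sigma1_neg (A : env_pred) : Sigma1 A -> Pi1 (fun xi rho => ~ A xi rho).
Proof.
  intros (p & Hp & Hs). destruct p; try contradiction.
  exists (fall (fnot p)). split; [exact Hp|]. intros xi rho; rewrite Hs; simpl.
  split; [intros H a Ha; apply H; eauto|intros H [a Ha]; apply (H a); auto].
Qed.

Lemma Pi1_neg (A : env_pred) : Pi1 A -> Sigma1 (fun xi rho => ~ A xi rho).
Proof.
  intros (p & Hp & Hs). destruct p; try contradiction.
  exists (fex (fnot p)). split; [exact Hp|]. intros xi rho; rewrite Hs; simpl.
  split; [|intros [a Ha] H; apply Ha, H].
  intros H. apply NNPP. intros N. apply H. intros a. apply NNPP. intros N'. apply N. eauto.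
Qed.

Lemma Pi1_of_Sigma1_neg (A : env_pred) : Sigma1 (fun xi rho => ~ A xi rho) -> Pi1 A.
Proof.
  intros H. apply Sigma1_neg in H. eapply Pi1_ext; [|exact H].
  intros; simpl. split; [tauto|apply NNPP].
Qed.

Lemma Delta0_Pi1 (A : env_pred) : Delta0 A -> Pi1 A.
Proof. intros H. apply Pi1_of_Sigma1_neg, Delta0_Sigma1, Delta0_neg, H. Qed.

Lemma Sigma1_subst (A : env_pred) (s : nat -> term) :
  Sigma1 A -> Sigma1 (fun xi rho => A xi (fun i => teval rho (s i))).
Proof.
  intros (p & Hp & Hs). exists (fsubst s p). split; [now apply fsubst_Sigma_Pi|].
  intros. now rewrite sat_fsubst.
Qed.

Lemma Sigma1_normal_form (A : env_pred) : Sigma1 A ->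
  exists B, bounded B /\ forall xi rho, A xi rho <-> exists z, sat xi (scons z rho) B.
Proof. intros (p & Hp & Hs). destruct p; try contradiction. now exists p. Qed.

(* Two unbounded existentials contract to one, bounding both by the new variable. *)
Lemma Sigma1_ex2 (B : formula) : bounded B ->
  Sigma1 (fun xi rho => exists y z, sat xi (scons z (scons y rho)) B).
Proof.
  intros HB.
  set (sg i := match i with 0 => tvar 0 | 1 => tvar 1 | S (S i) => tvar (S (S (S i))) end).
  exists (fex (fbex (tsucc (tvar 0)) (fbex (tsucc (tvar 1)) (fsubst sg B)))).
  split; [simpl; now apply bounded_fsubst|].
  intros xi rho. simpl. setoid_rewrite sat_fsubst.
  assert (Henv : forall w y z, forall i, teval (scons z (scons y (scons w rho))) (sg i) =
                                         scons z (scons y rho) i) by (now intros ? ? ? [|[|i]]).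
  setoid_rewrite (fun w y z => sat_ext B xi _ _ (Henv w y z)). split.
  - intros (y & z & H). exists (y + z). exists y; split; [lia|]. exists z; split; [lia|exact H].
  - intros (w & y & _ & z & _ & H). eauto.
Qed.

Lemma Sigma1_ex (A : env_pred) : Sigma1 A -> Sigma1 (fun xi rho => exists y, A xi (scons y rho)).
Proof.
  intros HA. destruct (Sigma1_normal_form _ HA) as (B & HB & Hs).
  eapply Sigma1_ext; [|apply (Sigma1_ex2 B HB)]. intros; simpl. setoid_rewrite Hs. reflexivity.
Qed.

Lemma Sigma1_and (A1 A2 : env_pred) : Sigma1 A1 -> Sigma1 A2 -> Sigma1 (fun xi rho => A1 xi rho /\ A2 xi rho).
Proof.
  intros H1 H2.
  destruct (Sigma1_normal_form _ H1) as (B1 & HB1 & Hs1), (Sigma1_normal_form _ H2) as (B2 & HB2 & Hs2).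
  set (s1 i := match i with 0 => tvar 1 | S i => tvar (S (S i)) end).
  set (s2 i := match i with 0 => tvar 0 | S i => tvar (S (S i)) end).
  eapply Sigma1_ext; [|apply (Sigma1_ex2 (fand (fsubst s1 B1) (fsubst s2 B2)))].
  - intros xi rho. rewrite Hs1, Hs2. simpl. setoid_rewrite sat_fsubst. split.
    + intros [[y Hy] [z Hz]]. exists y, z.
      split; (eapply sat_ext; [|eassumption]); intros [|i]; reflexivity.
    + intros (y & z & Hy & Hz).
      split; [exists y|exists z]; (eapply sat_ext; [|eassumption]); intros [|i]; reflexivity.
  - simpl; split; now apply bounded_fsubst.
Qed.

Lemma Sigma1_or (A1 A2 : env_pred) : Sigma1 A1 -> Sigma1 A2 -> Sigma1 (fun xi rho => A1 xi rho \/ A2 xi rho).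
Proof.
  intros H1 H2.
  destruct (Sigma1_normal_form _ H1) as (B1 & HB1 & Hs1), (Sigma1_normal_form _ H2) as (B2 & HB2 & Hs2).
  exists (fex (forr B1 B2)). split; [simpl; auto|].
  intros xi rho. rewrite Hs1, Hs2. simpl. split.
  - intros [[z H]|[z H]]; exists z; auto.
  - intros [z [H|H]]; [left|right]; exists z; auto.
Qed.

Lemma Sigma1_bex (A : env_pred) (t : term) : Sigma1 A ->
  Sigma1 (fun xi rho => exists x, x < teval rho t /\ A xi (scons x rho)).
Proof.
  intros HA. destruct (Sigma1_normal_form _ HA) as (B & HB & Hs).
  set (sg i := match i with 0 => tvar 1 | 1 => tvar 0 | S (S i) => tvar (S (S i)) end).
  exists (fex (fbex (tlift t) (fsubst sg B))). split; [simpl; now apply bounded_fsubst|].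
  intros xi rho. simpl. setoid_rewrite Hs. setoid_rewrite sat_fsubst. setoid_rewrite teval_tlift.
  split.
  - intros (x & Hx & z & H). exists z, x. split; [exact Hx|].
    eapply sat_ext; [|exact H]. intros [|[|i]]; reflexivity.
  - intros (z & x & Hx & H). exists x. split; [exact Hx|]. exists z.
    eapply sat_ext; [|exact H]. intros [|[|i]]; reflexivity.
Qed.

Lemma Pi1_and (A1 A2 : env_pred) : Pi1 A1 -> Pi1 A2 -> Pi1 (fun xi rho => A1 xi rho /\ A2 xi rho).
Proof.
  intros H1 H2. apply Pi1_of_Sigma1_neg.
  eapply Sigma1_ext; [|apply (Sigma1_or _ _ (Pi1_neg _ H1) (Pi1_neg _ H2))]. intros; simpl; tauto.
Qed.

Lemma Pi1_or (A1 A2 : env_pred) : Pi1 A1 -> Pi1 A2 -> Pi1 (fun xi rho => A1 xi rho \/ A2 xi rho).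
Proof.
  intros H1 H2. apply Pi1_of_Sigma1_neg.
  eapply Sigma1_ext; [|apply (Sigma1_and _ _ (Pi1_neg _ H1) (Pi1_neg _ H2))]. intros; simpl; tauto.
Qed.

Lemma Pi1_all (A : env_pred) : Pi1 A -> Pi1 (fun xi rho => forall y, A xi (scons y rho)).
Proof.
  intros H. apply Pi1_of_Sigma1_neg. eapply Sigma1_ext; [|exact (Sigma1_ex _ (Pi1_neg _ H))].
  intros; simpl. split; [|intros [y Hy] Ha; apply Hy, Ha].
  intros N. apply NNPP. intros N'. apply N. intros y. apply NNPP. eauto.
Qed.

Lemma Pi1_ball (A : env_pred) (t : term) :
  Pi1 A -> Pi1 (fun xi rho => forall x, x < teval rho t -> A xi (scons x rho)).
Proof.
  intros H. apply Pi1_of_Sigma1_neg. eapply Sigma1_ext; [|exact (Sigma1_bex _ t (Pi1_neg _ H))].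
  intros; simpl. split; [|intros (x & Hx & Hn) Ha; apply Hn, Ha, Hx].
  intros N. apply NNPP. intros N'. apply N. intros x Hx. apply NNPP. eauto.
Qed.

Lemma Delta1_of_Delta0 (A : env_pred) : Delta0 A -> Delta1 A.
Proof. intros H. split; [apply Delta0_Sigma1|apply Delta0_Pi1]; exact H. Qed.

Lemma Delta1_and (A1 A2 : env_pred) : Delta1 A1 -> Delta1 A2 -> Delta1 (fun xi rho => A1 xi rho /\ A2 xi rho).
Proof. intros [? ?] [? ?]; split; [apply Sigma1_and|apply Pi1_and]; auto. Qed.

Lemma Delta1_or (A1 A2 : env_pred) : Delta1 A1 -> Delta1 A2 -> Delta1 (fun xi rho => A1 xi rho \/ A2 xi rho).
Proof. intros [? ?] [? ?]; split; [apply Sigma1_or|apply Pi1_or]; auto. Qed.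

(* Uniqueness of the witness turns the bounded existential into a bounded
   universal, which keeps the Pi^0_1 side. *)
Lemma Delta1_bex_unique (C A : env_pred) (t : term) : Delta0 C -> Delta1 A ->
  (forall xi rho x x', C xi (scons x rho) -> C xi (scons x' rho) -> x = x') ->
  Delta1 (fun xi rho => exists x, x < teval rho t /\ (C xi (scons x rho) /\ A xi (scons x rho))).
Proof.
  intros HC [HA1 HA2] Hu. split.
  - apply (Sigma1_bex (fun xi rho => C xi rho /\ A xi rho)), Sigma1_and; [|exact HA1].
    now apply Delta0_Sigma1.
  - eapply Pi1_ext; [|apply Pi1_and; [apply Delta0_Pi1, (Delta0_bex C), HC|
                     apply (Pi1_ball (fun xi rho => ~ C xi rho \/ A xi rho)), Pi1_or;
                       [apply Delta0_Pi1, Delta0_neg, HC|exact HA2]]].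
    intros xi rho. simpl. split.
    + intros (x & Hx & Hc & Ha). split; [eauto|]. intros x' Hx'.
      destruct (classic (C xi (scons x' rho))) as [Hc'|Hc']; [right|now left].
      now rewrite (Hu xi rho x' x Hc' Hc).
    + intros [(x & Hx & Hc) H]. exists x. split; [exact Hx|]. split; [exact Hc|].
      destruct (H x Hx); [contradiction|assumption].
Qed.

Lemma Delta1_ext (A B : env_pred) : (forall xi rho, B xi rho <-> A xi rho) -> Delta1 A -> Delta1 B.
Proof. intros H [? ?]; split; [eapply Sigma1_ext|eapply Pi1_ext]; eauto. Qed.


(** * Quantifier prefixes *)

Fixpoint Qsigma (k : nat) (R : (nat -> nat) -> Prop) (rho : nat -> nat) : Prop :=
  match k with 0 => R rho | S k' => exists y, Qpi k' R (scons y rho) end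
with Qpi (k : nat) (R : (nat -> nat) -> Prop) (rho : nat -> nat) : Prop :=
  match k with 0 => R rho | S k' => forall y, Qsigma k' R (scons y rho) end.

Fixpoint sigma_prefix (k : nat) (t : formula) : formula :=
  match k with 0 => t | S k' => fex (pi_prefix k' t) end
with pi_prefix (k : nat) (t : formula) : formula :=
  match k with 0 => t | S k' => fall (sigma_prefix k' t) end.

Definition push (ys : list nat) (rho : nat -> nat) : nat -> nat := fold_right scons rho ys.

Lemma push_app (ys : list nat) (y : nat) (rho : nat -> nat) :
  push (ys ++ [y]) rho = push ys (scons y rho).
Proof. unfold push. now rewrite fold_right_app. Qed.

Lemma push_ge (ys : list nat) (rho : nat -> nat) (i : nat) : push ys rho (length ys + i) = rho i.
Proof. induction ys; simpl; auto. Qed.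

Lemma push_map (ys : list nat) (rho : nat -> nat) : map (push ys rho) (seq 0 (length ys)) = ys.
Proof.
  revert rho; induction ys; intros rho; simpl; auto. f_equal.
  rewrite <- seq_shift, map_map. apply IHys.
Qed.

Lemma push_n (ys : list nat) (rho : nat -> nat) : push ys rho (length ys) = rho 0.
Proof. rewrite <- (Nat.add_0_r (length ys)). apply push_ge. Qed.

Lemma push_Sn (ys : list nat) (rho : nat -> nat) : push ys rho (S (length ys)) = rho 1.
Proof. rewrite <- Nat.add_1_r. apply push_ge. Qed.

Lemma push_SSn (ys : list nat) (rho : nat -> nat) : push ys rho (S (S (length ys))) = rho 2.
Proof. replace (S (S (length ys))) with (length ys + 2) by lia. apply push_ge. Qed.

Lemma map_push_1 (ys : list nat) (rho : nat -> nat) :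
  map (push ys rho) (seq 0 (S (length ys))) = ys ++ [rho 0].
Proof. rewrite seq_S, map_app, push_map. simpl. now rewrite push_n. Qed.

Lemma map_push_2 (ys : list nat) (rho : nat -> nat) :
  map (push ys rho) (seq 0 (S (S (length ys)))) = ys ++ [rho 0; rho 1].
Proof. rewrite seq_S, map_app, map_push_1. simpl. now rewrite push_Sn, <- app_assoc. Qed.

Lemma Q_witness (k : nat) : forall R rho,
  (Qsigma k R rho -> exists ys, length ys = k /\ R (push ys rho)) /\
  (Qpi k R rho -> exists ys, length ys = k /\ R (push ys rho)).
Proof.
  induction k; intros R rho; simpl.
  - split; intros H; exists nil; auto.
  - split.
    + intros [y H]. destruct (proj2 (IHk R (scons y rho)) H) as (ys & Hl & Hr).
      exists (ys ++ [y]). rewrite push_app, length_app; simpl; split; auto; lia.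
    + intros H. destruct (proj1 (IHk R (scons 0 rho)) (H 0)) as (ys & Hl & Hr).
      exists (ys ++ [0]). rewrite push_app, length_app; simpl; split; auto; lia.
Qed.

Lemma Q_and_const (k : nat) : forall (C : Prop) X rho,
  (Qsigma k (fun r => C /\ X r) rho <-> C /\ Qsigma k X rho) /\
  (Qpi k (fun r => C /\ X r) rho <-> C /\ Qpi k X rho).
Proof.
  induction k; intros C X rho; simpl; [tauto|].
  split; split.
  - intros [y H]. apply (IHk C X (scons y rho)) in H. destruct H; split; eauto.
  - intros [HC [y H]]. exists y. apply (IHk C X (scons y rho)). auto.
  - intros H. split; [destruct (proj1 (proj1 (IHk C X (scons 0 rho))) (H 0)); auto|].
    intros y. apply (IHk C X (scons y rho)). auto.
  - intros [HC H] y. apply (IHk C X (scons y rho)). auto.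
Qed.

Lemma Q_transport (k : nat) : forall R1 R2 rho1 rho2,
  (forall ys, length ys = k -> (R1 (push ys rho1) <-> R2 (push ys rho2))) ->
  (Qsigma k R1 rho1 <-> Qsigma k R2 rho2) /\ (Qpi k R1 rho1 <-> Qpi k R2 rho2).
Proof.
  induction k; intros R1 R2 rho1 rho2 H; simpl.
  - specialize (H nil eq_refl). simpl in H. tauto.
  - assert (Hy : forall y, (Qsigma k R1 (scons y rho1) <-> Qsigma k R2 (scons y rho2)) /\
                           (Qpi k R1 (scons y rho1) <-> Qpi k R2 (scons y rho2))).
    { intros y. apply IHk. intros ys Hl. rewrite <- !push_app. apply H.
      rewrite length_app; simpl; lia. }
    split; split.
    + intros [y Hq]; exists y; apply Hy; auto.
    + intros [y Hq]; exists y; apply Hy; auto.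
    + intros Hq y; apply Hy; auto.
    + intros Hq y; apply Hy; auto.
Qed.

Lemma Q_const (k : nat) : forall (C : Prop) rho,
  (Qsigma k (fun _ => C) rho <-> C) /\ (Qpi k (fun _ => C) rho <-> C).
Proof.
  induction k; intros C rho; simpl; [tauto|].
  split; split.
  - intros [y H]; destruct (IHk C (scons y rho)) as [_ [H1 _]]; auto.
  - intros H; exists 0; destruct (IHk C (scons 0 rho)) as [_ [_ H1]]; auto.
  - intros H; destruct (IHk C (scons 0 rho)) as [[H1 _] _]; auto.
  - intros H y; destruct (IHk C (scons y rho)) as [[_ H1] _]; auto.
Qed.

Lemma Qsigma_Qpi_definable (B : env_pred) (k : nat) : Delta1 B -> 1 <= k ->
  (exists p, is_Sigma k p /\ forall xi rho, Qsigma k (B xi) rho <-> sat xi rho p) /\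
  (exists p, is_Pi k p /\ forall xi rho, Qpi k (B xi) rho <-> sat xi rho p).
Proof.
  intros [HS HP] Hk. induction k as [|k IH]; [lia|].
  destruct k as [|k].
  - split.
    + destruct (Sigma1_ex _ HS) as (p & Hp & Hs). exists p; split; auto.
    + destruct (Pi1_all _ HP) as (p & Hp & Hs). exists p; split; auto.
  - destruct (IH ltac:(lia)) as [(p & Hp & Hs) (q & Hq & Hq')]. split.
    + exists (fex q). split; [exact Hq|]. intros xi rho. simpl. setoid_rewrite Hq'. reflexivity.
    + exists (fall p). split; [exact Hp|]. intros xi rho. simpl. setoid_rewrite Hs. reflexivity.
Qed.

Lemma prefix_shape (n : nat) :
  (forall q, is_Pi n q -> exists t, bounded t /\ q = pi_prefix n t) /\
  (forall q, is_Sigma n q -> exists t, bounded t /\ q = sigma_prefix n t).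
Proof.
  induction n; split; intros q Hq; simpl in *; [now exists q..| |];
    destruct q; try contradiction.
  - destruct (proj2 IHn q Hq) as (t & Ht & ->). now exists t.
  - destruct (proj1 IHn q Hq) as (t & Ht & ->). now exists t.
Qed.

Lemma not_prefix (n : nat) : forall t xi rho,
  (~ sat xi rho (pi_prefix n t) <-> Qsigma n (fun r => ~ sat xi r t) rho) /\
  (~ sat xi rho (sigma_prefix n t) <-> Qpi n (fun r => ~ sat xi r t) rho).
Proof.
  induction n; intros t xi rho; simpl; [tauto|]. split.
  - split.
    + intros H. apply NNPP; intros N. apply H. intros a. apply NNPP; intros N'. apply N.
      exists a. apply IHn; auto.
    + intros [a Ha] H. apply (proj2 (IHn t xi (scons a rho))) in Ha. apply Ha; auto.
  - split.
    + intros H a. apply IHn. intros Hs. apply H; eauto.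
    + intros H [a Ha]. specialize (H a). apply (proj1 (IHn t xi (scons a rho))) in H. auto.
Qed.

(** * A Sigma^0_n set of numbers that is not Pi^0_n *)

Definition tcode_list (ts : list term) : term :=
  fold_right (fun t acc => tsucc (tpair2 t acc)) tzero ts.

Lemma teval_tcode_list (rho : nat -> nat) (ts : list term) :
  teval rho (tcode_list ts) = code_list (map (teval rho) ts).
Proof. induction ts; simpl; auto. now rewrite IHts. Qed.

Definition vars (k : nat) : list term := map tvar (seq 0 k).

Lemma map_vars (rho : nat -> nat) (k : nat) : map (teval rho) (vars k) = map rho (seq 0 k).
Proof. unfold vars. now rewrite map_map. Qed.

Lemma false_at_Delta1 (ts : list term) (tf : term) :
  Delta1 (fun xi rho => ~ sat no_reals (list_env (map (teval rho) ts)) (decode_formula (teval rho tf))).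
Proof.
  set (sg i := match i with 0 => tcode_list ts | 1 => tf | _ => tzero end).
  assert (Htruth : forall b, b <= 1 -> Sigma1 (fun xi rho => sat xi (fun i => teval rho (sg i)) (truth_f b)))
    by (intros b _; apply (Sigma1_subst (fun xi rho => sat xi rho (truth_f b)));
        exists (truth_f b); split; [apply truth_f_Sigma1|reflexivity]).
  assert (Hcorrect : forall xi rho b, b <= 1 ->
    sat xi (fun i => teval rho (sg i)) (truth_f b) <->
    truth_bit b (sat no_reals (list_env (map (teval rho) ts)) (decode_formula (teval rho tf))))
    by (intros; apply truth_f_correct; [apply teval_tcode_list|assumption]).
  split.
  - eapply Sigma1_ext; [|apply (Htruth 0); lia].
    intros xi rho. cbv beta. now rewrite Hcorrect, truth_bit_0 by lia.
  - eapply Pi1_ext; [|apply Sigma1_neg, (Htruth 1); lia].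
    intros xi rho. cbv beta. now rewrite Hcorrect, truth_bit_1 by lia.
Qed.

(* Doubling keeps [diag_set] inside the even numbers, so that [a] and [a + 1]
   are never both in it. *)
Definition diag_matrix (l : list nat) (x : nat) : Prop :=
  exists f, x = f + f /\ ~ sat no_reals (list_env l) (decode_formula f).

Lemma diag_matrix_Delta1 (ts : list term) (xt : term) :
  Delta1 (fun xi rho => diag_matrix (map (teval rho) ts) (teval rho xt)).
Proof.
  set (C (xi : nat -> nat -> bool) r := teval r (tlift xt) = r 0 + r 0).
  assert (HC : Delta0 C)
    by (exists (feq (tlift xt) (tplus (tvar 0) (tvar 0))); split; [simpl; auto|reflexivity]).
  pose proof (false_at_Delta1 (map tlift ts) (tvar 0)) as HA.
  eapply Delta1_ext; [|apply (Delta1_bex_unique C _ (tsucc xt) HC HA)].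
  - intros xi rho. unfold C, diag_matrix. cbn [teval scons].
    assert (Hm : forall x, map (teval (scons x rho)) (map tlift ts) = map (teval rho) ts)
      by (intros x; rewrite map_map; apply map_ext; intros; apply teval_tlift).
    setoid_rewrite Hm. setoid_rewrite teval_tlift.
    split; [intros (f & Hf & Hn); exists f; repeat split; auto; lia|].
    intros (f & _ & Hf & Hn). eauto.
  - unfold C. intros xi rho x x' H1 H2. cbn in H1, H2. rewrite teval_tlift in H1, H2. lia.
Qed.

Section Diagonal.
Variable n : nat.

Definition diag_base (r : nat -> nat) : Prop := diag_matrix (map r (seq 0 n) ++ [r n]) (r n).
Definition diag_set (a : nat) : Prop := Qsigma n diag_base (scons a no_nums).

Lemma diag_set_even (a : nat) : diag_set a -> exists f, a = f + f.
Proof.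
  intros H. destruct (proj1 (Q_witness n diag_base _) H) as (ys & Hl & Hd).
  unfold diag_base in Hd. rewrite <- Hl, push_n in Hd. destruct Hd as (f & Hf & _). eauto.
Qed.

Lemma list_env_app_push (ys : list nat) (a i : nat) : list_env (ys ++ [a]) i = push ys (scons a no_nums) i.
Proof.
  revert i; induction ys; intros i; simpl.
  - now destruct i as [|[|i]].
  - destruct i; simpl; auto. apply IHys.
Qed.

Lemma diag_set_encode (t : formula) : bounded t ->
  diag_set (encode_formula t + encode_formula t) <->
  ~ sat no_reals (scons (encode_formula t + encode_formula t) no_nums) (pi_prefix n t).
Proof.
  intros Ht. set (e := encode_formula t + encode_formula t).
  rewrite (proj1 (not_prefix n t no_reals _)). unfold diag_set.
  apply Q_transport. intros ys Hl.
  unfold diag_base, diag_matrix. rewrite <- Hl, push_n, push_map. cbn [scons].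
  assert (Henv : forall p, sat no_reals (list_env (ys ++ [e])) p <->
                           sat no_reals (push ys (scons e no_nums)) p)
    by (intros p; apply sat_ext, list_env_app_push).
  split.
  - intros (f & Hf & Hs). assert (f = encode_formula t) as -> by (unfold e in Hf; lia).
    now rewrite decode_encode_formula, Henv in Hs.
  - intros Hs. exists (encode_formula t). split; [reflexivity|]. now rewrite decode_encode_formula, Henv.
Qed.

Lemma diag_set_not_Pi (q : formula) : is_Pi n q ->
  ~ (forall a, diag_set a <-> sat no_reals (scons a no_nums) q).
Proof.
  intros Hq Hd. destruct (proj1 (prefix_shape n) q Hq) as (t & Ht & ->).
  pose proof (diag_set_encode t Ht) as Hdiag. rewrite Hd in Hdiag. tauto.
Qed.

End Diagonal.

(** * The equivalence relation on N *)

Lemma edge_of_pair_class {X : Type} (G E : X -> X -> Prop) (x y : X) :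
  (forall z, ~ G z z) -> (forall a b, E a b <-> clos_refl_trans X G a b) ->
  E x y -> x <> y -> (forall z, E x z -> z = x \/ z = y) -> G x y.
Proof.
  intros Hirr HE Hxy Hne Hclass. apply HE, clos_rt_rt1n in Hxy.
  destruct Hxy as [|c z Hxc _]; [contradiction|].
  assert (Hc : E x c) by (apply HE, rt_step, Hxc).
  destruct (Hclass c Hc); subst c; [exfalso; exact (Hirr x Hxc)|exact Hxc].
Qed.

Section NatRelation.
Variable n : nat.
Hypothesis Hn : 1 <= n.

Definition nat_rel_base : env_pred := fun xi r =>
  r n = r (S n) \/ (r (S n) = S (r n) /\ diag_matrix (map r (seq 0 n) ++ [r n]) (r n)) \/
  (r n = S (r (S n)) /\ diag_matrix (map r (seq 0 n) ++ [r (S n)]) (r (S n))).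

Lemma nat_rel_base_Delta1 : Delta1 nat_rel_base.
Proof.
  apply Delta1_or; [|apply Delta1_or; apply Delta1_and].
  - apply Delta1_of_Delta0. exists (feq (tvar n) (tvar (S n))). split; simpl; tauto.
  - apply Delta1_of_Delta0. exists (feq (tvar (S n)) (tsucc (tvar n))). split; simpl; tauto.
  - eapply Delta1_ext; [|apply (diag_matrix_Delta1 (vars n ++ [tvar n]) (tvar n))].
    intros; simpl. now rewrite map_app, map_vars.
  - apply Delta1_of_Delta0. exists (feq (tvar n) (tsucc (tvar (S n)))). split; simpl; tauto.
  - eapply Delta1_ext; [|apply (diag_matrix_Delta1 (vars n ++ [tvar (S n)]) (tvar (S n)))].
    intros; simpl. now rewrite map_app, map_vars.
Qed.

Definition Enat (a b : nat) : Prop := Qsigma n (nat_rel_base no_reals) (scons a (scons b no_nums)).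

Lemma Enat_Sigma : Sigma0_nat n Enat.
Proof.
  destruct (proj1 (Qsigma_Qpi_definable nat_rel_base n nat_rel_base_Delta1 Hn)) as (p & Hp & Hs).
  exists p. split; [exact Hp|]. intros a b. apply Hs.
Qed.

Lemma Enat_iff (a b : nat) :
  Enat a b <-> a = b \/ (b = S a /\ diag_set n a) \/ (a = S b /\ diag_set n b).
Proof.
  unfold Enat, diag_set.
  assert (Hbase : forall ys, length ys = n ->
    nat_rel_base no_reals (push ys (scons a (scons b no_nums))) <->
    a = b \/ (b = S a /\ diag_base n (push ys (scons a no_nums))) \/
             (a = S b /\ diag_base n (push ys (scons b no_nums)))).
  { intros ys Hl. unfold nat_rel_base, diag_base. rewrite <- Hl, !push_n, push_Sn, !push_map.
    reflexivity. }
  destruct (Nat.eq_dec a b) as [<-|Hab]; [|destruct (Nat.eq_dec b (S a)) as [->|Hb];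
    [|destruct (Nat.eq_dec a (S b)) as [->|Ha]]].
  - assert (Ht : forall ys, length ys = n ->
              nat_rel_base no_reals (push ys (scons a (scons a no_nums))) <-> True)
      by (intros ys Hl; rewrite Hbase by exact Hl; tauto).
    rewrite (proj1 (Q_transport n _ (fun _ => True) _ (scons a (scons a no_nums)) Ht)),
      (proj1 (Q_const n True _)). tauto.
  - assert (Ht : forall ys, length ys = n ->
              nat_rel_base no_reals (push ys (scons a (scons (S a) no_nums))) <->
              diag_base n (push ys (scons a no_nums)))
      by (intros ys Hl; rewrite Hbase by exact Hl; intuition lia).
    rewrite (proj1 (Q_transport n _ (diag_base n) _ _ Ht)). intuition lia.
  - assert (Ht : forall ys, length ys = n ->
              nat_rel_base no_reals (push ys (scons (S b) (scons b no_nums))) <->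
              diag_base n (push ys (scons b no_nums)))
      by (intros ys Hl; rewrite Hbase by exact Hl; intuition lia).
    rewrite (proj1 (Q_transport n _ (diag_base n) _ _ Ht)). intuition lia.
  - assert (Ht : forall ys, length ys = n ->
              nat_rel_base no_reals (push ys (scons a (scons b no_nums))) <-> False)
      by (intros ys Hl; rewrite Hbase by exact Hl; intuition lia).
    rewrite (proj1 (Q_transport n _ (fun _ => False) _ (scons a (scons b no_nums)) Ht)),
      (proj1 (Q_const n False _)). intuition lia.
Qed.

Lemma Enat_equiv : equivalence nat Enat.
Proof.
  constructor.
  - intros a. apply Enat_iff. auto.
  - intros a b c H1 H2. apply Enat_iff in H1, H2. apply Enat_iff.
    destruct H1 as [E1|[[E1 D1]|[E1 D1]]]; destruct H2 as [E2|[[E2 D2]|[E2 D2]]];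
      try (subst; tauto); try (left; lia);
      destruct (diag_set_even _ _ D1), (diag_set_even _ _ D2); lia.
  - intros a b H. apply Enat_iff in H. apply Enat_iff.
    destruct H as [?|[?|?]]; [left|right; right|right; left]; auto.
Qed.

Lemma Enat_not_graphable : ~ graphable (Pi0_nat n) Enat.
Proof.
  intros (G & (p & Hp & HG) & _ & Hirr & HE).
  set (sg i := match i with 0 => tvar 0 | 1 => tsucc (tvar 0) | _ => tzero end).
  apply (diag_set_not_Pi n (fsubst sg p)); [now apply fsubst_Sigma_Pi|]. intros a.
  transitivity (G a (S a));
    [|rewrite HG, sat_fsubst; apply sat_ext; intros [|[|i]]; reflexivity].
  split.
  - intros Hd. apply (edge_of_pair_class G Enat); [exact Hirr|exact HE|apply Enat_iff; auto|lia|].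
    intros z Hz. apply Enat_iff in Hz as [?|[[? _]|[? Hz]]]; try lia.
    destruct (diag_set_even _ _ Hd), (diag_set_even _ _ Hz). lia.
  - intros Hg. assert (He : Enat a (S a)) by now apply HE, rt_step.
    apply Enat_iff in He as [?|[[_ ?]|[? _]]]; auto; lia.
Qed.

End NatRelation.

(** * The equivalence relation on Cantor space *)

Definition fiff (a b : formula) : formula := forr (fand a b) (fand (fnot a) (fnot b)).

Lemma Delta0_reals_agree (a : term) : Delta0 (fun xi r => xi 0 (teval r a) = xi 1 (teval r a)).
Proof.
  exists (fiff (fmem 0 a) (fmem 1 a)). split; [simpl; tauto|].
  intros xi r; simpl. destruct (xi 0 (teval r a)), (xi 1 (teval r a)); intuition congruence.
Qed.

Definition marks (xi : nat -> nat -> bool) (k i : nat) : Prop :=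
  (xi 0 (S i) = true <-> i = k) /\ (xi 1 (S i) = true <-> i = k).

Lemma Delta0_marks (k i : term) : Delta0 (fun xi r => marks xi (teval r k) (teval r i)).
Proof.
  exists (fand (fiff (fmem 0 (tsucc i)) (feq i k)) (fiff (fmem 1 (tsucc i)) (feq i k))).
  split; [simpl; tauto|]. intros xi r; unfold marks; simpl. tauto.
Qed.

Lemma Delta0_pair2_eq (i j k : nat) : Delta0 (fun xi r => r i + r i = pair2 (r j) (r k)).
Proof.
  exists (feq (tplus (tvar i) (tvar i)) (tpair2 (tvar j) (tvar k))).
  split; [simpl; auto|reflexivity].
Qed.

Definition point0 (k : nat) : nat -> bool := fun i => match i with 0 => false | S j => j =? k end.
Definition point1 (k : nat) : nat -> bool := fun i => match i with 0 => true | S j => j =? k end.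

Definition tinsert (d : nat) (t : term) : term :=
  tsubst (fun i => if i <? d then tvar i else tvar (S i)) t.

Lemma teval_tinsert (d : nat) (rho rho' : nat -> nat) (t : term) :
  (forall i, i < d -> rho' i = rho i) -> (forall i, d <= i -> rho' (S i) = rho i) ->
  teval rho' (tinsert d t) = teval rho t.
Proof.
  intros H1 H2. unfold tinsert. rewrite teval_tsubst. apply teval_ext. intros i.
  destruct (i <? d) eqn:E; simpl; [apply Nat.ltb_lt in E|apply Nat.ltb_ge in E]; auto.
Qed.

(* Replaces the reals [X_0 = point0 k], [X_1 = point1 k] by the number variable
   [d] holding [k]. *)
Fixpoint points_elim (d : nat) (p : formula) : formula :=
  match p with
  | feq u v => feq (tinsert d u) (tinsert d v)
  | flt u v => flt (tinsert d u) (tinsert d v)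
  | fmem 0 u => feq (tinsert d u) (tsucc (tvar d))
  | fmem 1 u => forr (feq (tinsert d u) tzero) (feq (tinsert d u) (tsucc (tvar d)))
  | fmem _ u => ffalse
  | fnot q => fnot (points_elim d q)
  | fand q r => fand (points_elim d q) (points_elim d r)
  | forr q r => forr (points_elim d q) (points_elim d r)
  | fbex u q => fbex (tinsert d u) (points_elim (S d) q)
  | fball u q => fball (tinsert d u) (points_elim (S d) q)
  | fex q => fex (points_elim (S d) q)
  | fall q => fall (points_elim (S d) q)
  end.

Lemma sat_points_elim (k : nat) (p : formula) : forall d rho rho',
  (forall i, i < d -> rho' i = rho i) -> rho' d = k -> (forall i, d <= i -> rho' (S i) = rho i) ->
  sat (scons (point0 k) (scons (point1 k) no_reals)) rho p <-> sat no_reals rho' (points_elim d p).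
Proof.
  induction p; intros d rho rho' H1 H2 H3; simpl;
    try (assert (Hq : forall a, sat (scons (point0 k) (scons (point1 k) no_reals)) (scons a rho) p <->
                                sat no_reals (scons a rho') (points_elim (S d) p))
           by (intros a; apply IHp; [intros [|i] Hi; simpl; auto; apply H1; lia|exact H2|
                                     intros [|i] Hi; simpl; [lia|apply H3; lia]]);
         setoid_rewrite Hq);
    rewrite ?(teval_tinsert d rho rho' _ H1 H3), ?(IHp d rho rho' H1 H2 H3),
      ?(IHp1 d rho rho' H1 H2 H3), ?(IHp2 d rho rho' H1 H2 H3); try reflexivity.
  destruct n as [|[|n]]; simpl; rewrite ?(teval_tinsert d rho rho' _ H1 H3), ?H2.
  - destruct (teval rho t) as [|j]; simpl; [split; [discriminate|lia]|].
    rewrite Nat.eqb_eq. lia.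
  - destruct (teval rho t) as [|j]; simpl; [tauto|]. rewrite Nat.eqb_eq. lia.
  - unfold no_reals. split; [discriminate|lia].
Qed.

Lemma bounded_points_elim (p : formula) (d : nat) : bounded p -> bounded (points_elim d p).
Proof. revert d; induction p; intros d Hb; simpl in *; try destruct n as [|[|n]]; simpl; intuition. Qed.

Lemma points_elim_Sigma_Pi (n : nat) :
  (forall p d, is_Sigma n p -> is_Sigma n (points_elim d p)) /\
  (forall p d, is_Pi n p -> is_Pi n (points_elim d p)).
Proof.
  induction n; split; intros p d H; simpl in *; try (now apply bounded_points_elim);
    destruct p; try contradiction; now apply IHn.
Qed.

Section CantorRelation.
Variable m : nat.

(* The matrix of [Ecantor] below its first two quantifiers [exists u, forall z]:
   if the heads agree it says [X_0 z = X_1 z]; otherwise [u] is the pair of the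
   mark [k] and the first witness [v] of [diag_set (m + 2) k], and [z] is both
   a position checked by [marks] and the first universal variable of [diag_set]. *)
Definition cantor_base : env_pred := fun xi r =>
  (xi 0 0 = xi 1 0 /\ xi 0 (r m) = xi 1 (r m)) \/
  (xi 0 0 <> xi 1 0 /\
   exists k, k < S (r (S m)) /\
     ((exists v, v < S (r (S m)) /\ r (S m) + r (S m) = pair2 k v) /\
      (exists v, v < S (r (S m)) /\ (r (S m) + r (S m) = pair2 k v /\
          (marks xi k (r m) /\ diag_matrix (map r (seq 0 (S m)) ++ [v; k]) k))))).

Lemma cantor_base_Delta1 : Delta1 cantor_base.
Proof.
  apply Delta1_or.
  - apply Delta1_of_Delta0, Delta0_and; [apply (Delta0_reals_agree tzero)|apply (Delta0_reals_agree (tvar m))].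
  - apply Delta1_and; [apply Delta1_of_Delta0, Delta0_neg, (Delta0_reals_agree tzero)|].
    set (Ck (xi : nat -> nat -> bool) r :=
           exists v, v < S (r (S (S m))) /\ r (S (S m)) + r (S (S m)) = pair2 (r 0) v).
    set (Ak xi r :=
           exists v, v < S (r (S (S m))) /\ (r (S (S m)) + r (S (S m)) = pair2 (r 0) v /\
             (marks xi (r 0) (r (S m)) /\
              diag_matrix (map (fun i => r (S i)) (seq 0 (S m)) ++ [v; r 0]) (r 0)))).
    assert (HCk : Delta0 Ck)
      by (eapply Delta0_ext; [|apply (Delta0_bex _ (tsucc (tvar (S (S m)))) (Delta0_pair2_eq (S (S (S m))) 1 0))];
          reflexivity).
    assert (HAk : Delta1 Ak).
    { set (ts := map (fun i => tvar (S (S i))) (seq 0 (S m)) ++ [tvar 0; tvar 1]).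
      eapply Delta1_ext;
        [|apply (Delta1_bex_unique _ (fun xi r => marks xi (r 1) (r (S (S m))) /\ diag_matrix (map (teval r) ts) (r 1))
                   (tsucc (tvar (S (S m)))) (Delta0_pair2_eq (S (S (S m))) 1 0))].
      - intros xi r. unfold Ak, ts. cbn [teval scons].
        assert (Em : forall v, map (teval (scons v r)) (map (fun i => tvar (S (S i))) (seq 0 (S m))) =
                               map (fun i => r (S i)) (seq 0 (S m)))
          by (intros v; now rewrite map_map).
        setoid_rewrite map_app. setoid_rewrite Em. reflexivity.
      - apply Delta1_and; [apply Delta1_of_Delta0, (Delta0_marks (tvar 1) (tvar (S (S m))))|].
        apply (diag_matrix_Delta1 ts (tvar 1)).
      - intros xi r x x' H1 H2. simpl in H1, H2. rewrite H1 in H2. now apply pair2_inj in H2. }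
    eapply Delta1_ext; [|apply (Delta1_bex_unique Ck Ak (tsucc (tvar (S m))) HCk HAk)].
    + intros xi r. reflexivity.
    + intros xi r x x' (v & _ & H1) (v' & _ & H2). simpl in H1, H2. rewrite H1 in H2.
      now apply pair2_inj in H2.
Qed.
Definition Ecantor (x y : nat -> bool) : Prop :=
  Qsigma (S (S m)) (cantor_base (scons x (scons y no_reals))) no_nums.

Lemma Ecantor_Sigma : Sigma0_cantor (S (S m)) Ecantor.
Proof.
  destruct (proj1 (Qsigma_Qpi_definable cantor_base (S (S m)) cantor_base_Delta1 ltac:(lia)))
    as (p & Hp & Hs).
  exists p. split; [exact Hp|]. intros x y. apply Hs.
Qed.

Lemma Ecantor_same_head (x y : nat -> bool) : x 0 = y 0 -> Ecantor x y <-> forall i, x i = y i.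
Proof.
  intros E0. unfold Ecantor. cbn [Qsigma Qpi].
  assert (Hz : forall u z, Qsigma m (cantor_base (scons x (scons y no_reals))) (scons z (scons u no_nums))
                           <-> x z = y z).
  { intros u z.
    assert (Ht : forall ys, length ys = m ->
      cantor_base (scons x (scons y no_reals)) (push ys (scons z (scons u no_nums))) <-> x z = y z).
    { intros ys Hl. unfold cantor_base. rewrite <- Hl, push_n. simpl. split; [|tauto].
      intros [[_ H]|[H _]]; [exact H|contradiction]. }
    rewrite (proj1 (Q_transport m _ (fun _ => x z = y z) _ (scons z (scons u no_nums)) Ht)).
    apply Q_const. }
  setoid_rewrite Hz. split; [intros [u H]; exact H|intros H; now exists 0].
Qed.

Lemma Ecantor_diff_head (x y : nat -> bool) : x 0 <> y 0 ->
  Ecantor x y <->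
  exists k, (forall i, marks (scons x (scons y no_reals)) k i) /\ diag_set (S (S m)) k.
Proof.
  intros E0. unfold Ecantor. cbn [Qsigma Qpi]. set (xi := scons x (scons y no_reals)).
  assert (Hz : forall u z, Qsigma m (cantor_base xi) (scons z (scons u no_nums)) <->
               marks xi (fst (unpair u)) z /\
               Qsigma m (diag_base (S (S m)))
                 (scons z (scons (snd (unpair u)) (scons (fst (unpair u)) no_nums)))).
  { intros u z. destruct (unpair u) as [k v] eqn:Eu. cbn [fst snd].
    pose proof (unpair_spec _ _ _ Eu) as Hu. pose proof (pair2_half_le _ _ _ Hu).
    assert (Ht : forall ys, length ys = m ->
      cantor_base xi (push ys (scons z (scons u no_nums))) <->
      (fun r => marks xi k z /\ diag_base (S (S m)) r) (push ys (scons z (scons v (scons k no_nums))))).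
    { intros ys Hl. unfold cantor_base, diag_base.
      rewrite <- Hl, push_n, push_Sn, push_SSn, map_push_1, map_push_2. simpl. split.
      - intros [[Hc _]|[_ (k' & _ & _ & v' & _ & Hk & HP & HD)]]; [contradiction|].
        rewrite Hu in Hk. apply pair2_inj in Hk as [<- <-].
        rewrite <- !app_assoc in *. simpl in *. auto.
      - intros [HP HD]. right. split; [exact E0|]. exists k. split; [lia|].
        split; [exists v; split; [lia|auto]|]. exists v. split; [lia|]. rewrite <- !app_assoc in *. simpl in *. auto. }
    rewrite (proj1 (Q_transport m _ _ _ _ Ht)). apply Q_and_const. }
  setoid_rewrite Hz. unfold diag_set. cbn [Qsigma Qpi]. split.
  - intros [u H]. exists (fst (unpair u)). split; [intros i; apply (H i)|].
    exists (snd (unpair u)). intros z. apply (H z).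
  - intros (k & HP & v & HD). exists (pair k v). rewrite unpair_pair. simpl. auto.
Qed.

Lemma Ecantor_equiv : equivalence (nat -> bool) Ecantor.
Proof.
  assert (Hiff : forall x y, Ecantor x y <-> (x 0 = y 0 /\ forall i, x i = y i) \/
    (x 0 <> y 0 /\ exists k, (forall i, marks (scons x (scons y no_reals)) k i) /\ diag_set (S (S m)) k)).
  { intros x y. destruct (bool_dec (x 0) (y 0)) as [E|E];
      [rewrite Ecantor_same_head|rewrite Ecantor_diff_head]; tauto. }
  constructor.
  - intros x. apply Hiff. auto.
  - intros x y z H1 H2. apply Hiff in H1, H2. apply Hiff. unfold marks in *; simpl in *.
    destruct H1 as [[E1 F1]|[E1 (k & P1 & D1)]], H2 as [[E2 F2]|[E2 (k' & P2 & D2)]].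
    + left. split; [congruence|]. intros i. now rewrite F1.
    + right. split; [congruence|]. exists k'. split; [|exact D2]. intros i. now rewrite F1.
    + right. split; [congruence|]. exists k. split; [|exact D1]. intros i. now rewrite <- F2.
    + left. split; [destruct (x 0), (y 0), (z 0); congruence|].
      intros [|i]; [destruct (x 0), (y 0), (z 0); congruence|].
      apply eq_true_iff_eq. destruct (P1 i), (P2 i). tauto.
  - intros x y H. apply Hiff in H. apply Hiff. unfold marks in *; simpl in *.
    destruct H as [[E1 F1]|[E1 (k & P1 & D1)]].
    + left; split; auto.
    + right; split; auto. exists k; split; auto. intros i; destruct (P1 i); tauto.
Qed.

Lemma point0_neq_point1 (k : nat) : point0 k <> point1 k.
Proof. intros E. discriminate (f_equal (fun x => x 0) E). Qed.

Lemma Ecantor_points (k : nat) : Ecantor (point0 k) (point1 k) <-> diag_set (S (S m)) k.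
Proof.
  rewrite Ecantor_diff_head by discriminate. unfold marks; simpl. split.
  - intros (k' & HP & HD). destruct (HP k) as [A _].
    now assert (k = k') as <- by (apply A, Nat.eqb_refl).
  - intros HD. exists k. split; [|exact HD]. intros i. rewrite Nat.eqb_eq. tauto.
Qed.

Lemma Ecantor_class_point0 (k : nat) (z : nat -> bool) :
  Ecantor (point0 k) z -> z = point0 k \/ z = point1 k.
Proof.
  intros Hz. destruct (bool_dec (z 0) false) as [E|E].
  - left. rewrite Ecantor_same_head in Hz by (simpl; congruence).
    apply functional_extensionality. intros i. now rewrite Hz.
  - right. rewrite Ecantor_diff_head in Hz by (simpl; congruence).
    destruct Hz as (k' & HP & _).
    unfold marks in HP; simpl in HP.
    assert (k = k') as <- by (apply (proj1 (proj1 (HP k))), Nat.eqb_refl).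
    apply functional_extensionality. intros [|i]; simpl; [now destruct (z 0)|].
    apply eq_true_iff_eq. rewrite Nat.eqb_eq. apply (HP i).
Qed.

Lemma Ecantor_not_graphable : ~ graphable (Pi0_cantor (S (S m))) Ecantor.
Proof.
  intros (G & (p & Hp & HG) & _ & Hirr & HE).
  apply (diag_set_not_Pi (S (S m)) (points_elim 0 p)); [now apply points_elim_Sigma_Pi|].
  intros k. transitivity (G (point0 k) (point1 k));
    [|rewrite HG; apply sat_points_elim; [lia|reflexivity|reflexivity]].
  split.
  - intros Hd. apply (edge_of_pair_class G Ecantor); [exact Hirr|exact HE| |apply point0_neq_point1|].
    + now apply Ecantor_points.
    + apply Ecantor_class_point0.
  - intros Hg. apply Ecantor_points, HE, rt_step, Hg.
Qed.

End CantorRelation.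

Theorem proposition3p3 :
  (forall n : nat, 2 <= n ->
     exists E : (nat -> bool) -> (nat -> bool) -> Prop,
       equivalence (nat -> bool) E /\ Sigma0_cantor n E /\
       ~ graphable (Pi0_cantor n) E) /\
  (forall n : nat, 1 <= n ->
     exists E : nat -> nat -> Prop,
       equivalence nat E /\ Sigma0_nat n E /\
       ~ graphable (Pi0_nat n) E).
Proof.
  split.
  - intros n Hn. destruct n as [|[|m]]; [lia|lia|].
    exists (Ecantor m). auto using Ecantor_equiv, Ecantor_Sigma, Ecantor_not_graphable.
  - intros n Hn. exists (Enat n). auto using Enat_equiv, Enat_Sigma, Enat_not_graphable.
Qed.
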